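(* Let $(q_n),(r_n)$ be complex sequences vanishing faster than any negative power of $|n|$ as $n\to\pm\infty$, with $1-q_nr_n\ne0$ and $1+q_nr_{n+1}\neq0$ for all $n\in\mathbb Z$. Let $T$ and $\bar T$ be the transmission coefficients (with their meromorphic extensions to $|z|<1$ and $|z|>1$, respectively) of the system $$\begin{bmatrix}\alpha_n\\ \beta_n\end{bmatrix}=\begin{bmatrix} z & (z-z^{-1})q_n\\ z\,r_n & z^{-1}+(z-z^{-1})q_nr_n\end{bmatrix}\begin{bmatrix}\alpha_{n+1}\\ \beta_{n+1}\end{bmatrix}.$$ Then $$T=\frac1{D_\infty}\big[1-z^2S_\infty+O(z^4)\big],\quad z\to0,\qquad \bar T=\frac1{E_\infty}\Big[1-\frac1{z^2}Q_\infty+O(z^{-4})\Big],\quad z\to\infty,$$ where $D_\infty=\prod_{j\in\mathbb Z}(1-q_jr_j)$, $E_\infty=\prod_{j\in\mathbb Z}(1+q_jr_{j+1})$, $$S_\infty=\sum_{k=-\infty}^{\infty}\frac{r_k(q_k-q_{k+1}-q_kq_{k+1}r_{k+1})}{(1-q_kr_k)(1-q_{k+1}r_{k+1})},\qquad Q_\infty=\sum_{k=-\infty}^{\infty}\frac{r_{k+2}(q_k-q_{k+1}-q_kq_{k+1}r_{k+1})}{(1+q_kr_{k+1})(1+q_{k+1}r_{k+2})}.$$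
   Context: For $|z|=1$ the Jost solution $\psi_n$ is the solution with $\psi_n=\begin{bmatrix}o(1)\\ z^n[1+o(1)]\end{bmatrix}$ as $n\to+\infty$, and $\bar\psi_n$ the solution with $\bar\psi_n=\begin{bmatrix}z^{-n}[1+o(1)]\\ o(1)\end{bmatrix}$ as $n\to+\infty$ (overbar is not complex conjugation). The transmission coefficients $T$, $\bar T$ are defined on $|z|=1$ by: the second component of $\psi_n$ equals $(1/T)z^n[1+o(1)]$ as $n\to-\infty$, and the first component of $\bar\psi_n$ equals $(1/\bar T)z^{-n}[1+o(1)]$ as $n\to-\infty$. (For this system the left and right transmission coefficients coincide.) *)

From Stdlib Require Import Reals ZArith Lia Lra.
From Coquelicot Require Import Coquelicot.
Open Scope R_scope.
Open Scope C_scope.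

Definition zpow (z : C) (n : Z) : C :=
  match n with
  | Z0 => 1
  | Zpos p => Cpow z (Pos.to_nat p)
  | Zneg p => / Cpow z (Pos.to_nat p)
  end.

Definition rapidly_decreasing (u : Z -> C) : Prop :=
  forall (k : nat) (eps : R), (0 < eps)%R ->
    exists N : Z, forall n : Z, (N <= Z.abs n)%Z ->
      (pow (IZR (Z.abs n)) k * Cmod (u n) < eps)%R.

Definition cv_pinf (u : Z -> C) (l : C) : Prop :=
  forall eps : R, (0 < eps)%R -> exists N : Z, forall n : Z, (N <= n)%Z ->
    (Cmod (u n - l) < eps)%R.
Definition cv_minf (u : Z -> C) (l : C) : Prop :=
  forall eps : R, (0 < eps)%R -> exists N : Z, forall n : Z, (n <= N)%Z ->
    (Cmod (u n - l) < eps)%R.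

Definition cv_nat (u : nat -> C) (l : C) : Prop :=
  forall eps : R, (0 < eps)%R -> exists N : nat, forall n : nat, (N <= n)%nat ->
    (Cmod (u n - l) < eps)%R.

Fixpoint sumZ (f : Z -> C) (a : Z) (len : nat) : C :=
  match len with
  | O => 0
  | S l => f a + sumZ f (a + 1)%Z l
  end.
Fixpoint prodZ (f : Z -> C) (a : Z) (len : nat) : C :=
  match len with
  | O => 1
  | S l => f a * prodZ f (a + 1)%Z l
  end.

Definition psumZ (f : Z -> C) (N : nat) : C := sumZ f (- Z.of_nat N)%Z (2 * N + 1).
Definition pprodZ (f : Z -> C) (N : nat) : C := prodZ f (- Z.of_nat N)%Z (2 * N + 1).

Definition sumZ_is (f : Z -> C) (s : C) : Prop := cv_nat (psumZ f) s.
Definition prodZ_is (f : Z -> C) (p : C) : Prop := cv_nat (pprodZ f) p.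

Definition solves (q r : Z -> C) (z : C) (alpha beta : Z -> C) : Prop :=
  forall n : Z,
    alpha n = z * alpha (n + 1)%Z + (z - / z) * q n * beta (n + 1)%Z /\
    beta n = z * r n * alpha (n + 1)%Z + (/ z + (z - / z) * q n * r n) * beta (n + 1)%Z.

(** Jost solution psi: psi_n = [o(1) ; z^n (1 + o(1))] as n -> +oo,
    written in the normalised form z^{-n} psi_n -> [0; 1]
    (identical to the paper's condition for |z| = 1, and the natural
    definition of the analytic continuation to 0 < |z| < 1). *)
Definition jost (q r : Z -> C) (z : C) (alpha beta : Z -> C) : Prop :=
  solves q r z alpha beta /\
  cv_pinf (fun n => zpow z (- n) * alpha n) 0 /\
  cv_pinf (fun n => zpow z (- n) * beta n) 1.

(** Jost solution psibar: psibar_n = [z^{-n} (1 + o(1)); o(1)] as n -> +oo,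
    written as z^n psibar_n -> [1; 0]. *)
Definition jostbar (q r : Z -> C) (z : C) (alpha beta : Z -> C) : Prop :=
  solves q r z alpha beta /\
  cv_pinf (fun n => zpow z n * alpha n) 1 /\
  cv_pinf (fun n => zpow z n * beta n) 0.

(** t is the transmission coefficient T at z:
    second component of psi_n = (1/T) z^n (1 + o(1)) as n -> -oo. *)
Definition transT (q r : Z -> C) (z t : C) : Prop :=
  t <> 0 /\ exists alpha beta : Z -> C, jost q r z alpha beta /\
    cv_minf (fun n => zpow z (- n) * beta n) (/ t).

(** t is the transmission coefficient Tbar at z:
    first component of psibar_n = (1/Tbar) z^{-n} (1 + o(1)) as n -> -oo. *)
Definition transTbar (q r : Z -> C) (z t : C) : Prop :=
  t <> 0 /\ exists alpha beta : Z -> C, jostbar q r z alpha beta /\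
    cv_minf (fun n => zpow z n * alpha n) (/ t).

From Stdlib Require Import Reals ZArith Lia Lra IndefiniteDescription.
From Coquelicot Require Import Coquelicot.
Open Scope R_scope.
Open Scope C_scope.

(** Put [w = z^2] (resp. [w = z^(-2)]).  Normalising the Jost solution [psi] by [z^(-n)]
    (resp. [psibar] by [z^n], with its components swapped) turns the system into
    [G n = (A_n + w B_n) G (n+1)] with [G -> (0, 1)] at [+oo], where [A_n - diag(0, 1)] and
    [B_n - diag(1, 0)] are [O(1/n^2)] by the rapid decay of [q] and [r]; the limit at [-oo] of
    the second component of [G] is [1/T] (resp. [1/Tbar]).  A discrete Gronwall inequality shows
    that for [|w| <= 1] this system is solvable by Picard iteration and that all its solutions
    are bounded uniformly in [w].  Write [G = v0 + w v1 + w^2 R], where [v0] and [v1] solve the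
    system at [w = 0] without source and with source [B v0]: the remainder [R] solves the full
    system with source [B v1], hence is bounded, so [1/T = L0 + w L1 + O(w^2)].  At [w = 0] the
    second component of [v0] obeys [P n = (1 - q_n r_n) P (n+1)] (resp. [1 + q_n r_(n+1)]), so
    [L0] is the infinite product [D_oo] (resp. [E_oo]), and [L1 / L0] telescopes into [S_oo]
    (resp. [Q_oo]).  Inverting the expansion gives the claim. *)

Lemma Cmod_sub_comm (a b : C) : Cmod (a - b) = Cmod (b - a).
Proof. replace (a - b) with (- (b - a)) by ring. apply Cmod_opp. Qed.

Lemma Cmod_sub_triangle (a b c : C) : (Cmod (a - c) <= Cmod (a - b) + Cmod (b - c))%R.
Proof. replace (a - c) with ((a - b) + (b - c)) by ring. apply Cmod_triangle. Qed.

Lemma Cmod_le_sub_add (a b : C) : (Cmod a <= Cmod (a - b) + Cmod b)%R.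
Proof. replace a with ((a - b) + b) at 1 by ring. apply Cmod_triangle. Qed.

Lemma Cmod_lin2 (x a y b : C) :
  (Cmod (x * a + y * b) <= Cmod x * Cmod a + Cmod y * Cmod b)%R.
Proof. eapply Rle_trans; [apply Cmod_triangle|]. rewrite !Cmod_mult. lra. Qed.

Lemma Cmod_le_Re_Im (c : C) : (Cmod c <= Rabs (Re c) + Rabs (Im c))%R.
Proof.
  destruct c as [x y]. change (Cmod (x, y) <= Rabs x + Rabs y)%R.
  replace (x, y) with (RtoC x + (0, y)%R) by (apply injective_projections; simpl; ring).
  eapply Rle_trans; [apply Cmod_triangle|]. rewrite Cmod_R.
  apply Rplus_le_compat_l. unfold Cmod; simpl.
  rewrite <- (sqrt_pow2 (Rabs y)) by apply Rabs_pos. rewrite pow2_abs.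
  right; f_equal; ring.
Qed.

Lemma Cmod_eq_0_sub (a b : C) : Cmod (a - b) = 0%R -> a = b.
Proof.
  intros h. apply Cmod_eq_0 in h.
  replace a with ((a - b) + b) by ring. rewrite h. ring.
Qed.

Lemma RtoC_1_neq_0 : RtoC 1 <> 0.
Proof. intros E. apply (f_equal fst) in E. simpl in E. lra. Qed.

Lemma Cinv_neq_0 (x : C) : x <> 0 -> / x <> 0.
Proof.
  intros hx E. apply RtoC_1_neq_0.
  replace (RtoC 1) with (x * / x) by (field; auto). rewrite E. ring.
Qed.

Lemma exp_le_mono (x y : R) : (x <= y)%R -> (exp x <= exp y)%R.
Proof. intros [h|<-]; [left; apply exp_increasing, h|lra]. Qed.

Lemma mul_lt_of_lt_div (K x e : R) : (0 <= K)%R -> (x < e / (K + 1))%R -> ((K + 1) * x < e)%R.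
Proof.
  intros hK hx. apply (Rmult_lt_compat_l (K + 1)) in hx; [|lra].
  replace ((K + 1) * (e / (K + 1)))%R with e in hx by (field; lra). lra.
Qed.

(** * Limits of complex sequences *)

Lemma cv_nat_ext (u v : nat -> C) (l : C) :
  (forall n, u n = v n) -> cv_nat u l -> cv_nat v l.
Proof. intros H Hu e he. destruct (Hu e he) as [N HN]. exists N. intros n hn. rewrite <- H. auto. Qed.

Lemma cv_nat_const (c : C) : cv_nat (fun _ => c) c.
Proof. intros e he. exists 0%nat. intros. replace (c - c) with (RtoC 0) by ring. rewrite Cmod_0. auto. Qed.

Lemma cv_nat_lin (u v : nat -> C) (a b c : C) :
  cv_nat u a -> cv_nat v b -> cv_nat (fun n => u n + c * v n) (a + c * b).
Proof.
  intros Hu Hv e he. pose proof (Cmod_ge_0 c).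
  destruct (Hu (e/2)%R ltac:(lra)) as [N1 H1].
  destruct (Hv (e / 2 / (Cmod c + 1))%R) as [N2 H2]; [apply Rdiv_lt_0_compat; lra|].
  exists (N1 + N2)%nat. intros n hn.
  replace (u n + c * v n - (a + c * b)) with ((u n - a) + c * (v n - b)) by ring.
  eapply Rle_lt_trans; [apply Cmod_triangle|]. rewrite Cmod_mult.
  specialize (H1 n ltac:(lia)). specialize (H2 n ltac:(lia)).
  pose proof (mul_lt_of_lt_div (Cmod c) _ (e/2) H H2). pose proof (Cmod_ge_0 (v n - b)). nra.
Qed.

Lemma cv_nat_sub (u v : nat -> C) (a b : C) :
  cv_nat u a -> cv_nat v b -> cv_nat (fun n => u n - v n) (a - b).
Proof.
  intros Hu Hv. replace (a - b) with (a + (-1) * b) by ring.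
  eapply cv_nat_ext; [|apply (cv_nat_lin u v a b (-1) Hu Hv)]. intros; simpl; ring.
Qed.

Lemma cv_nat_eventually_bounded (u : nat -> C) (a : C) : cv_nat u a ->
  exists N, forall n, (N <= n)%nat -> (Cmod (u n) <= Cmod a + 1)%R.
Proof.
  intros Hu. destruct (Hu 1%R ltac:(lra)) as [N HN]. exists N. intros n hn.
  pose proof (Cmod_le_sub_add (u n) a). specialize (HN n hn). lra.
Qed.

Lemma cv_nat_mult (u v : nat -> C) (a b : C) :
  cv_nat u a -> cv_nat v b -> cv_nat (fun n => u n * v n) (a * b).
Proof.
  intros Hu Hv.
  assert (H0 : cv_nat (fun n => (u n - a) * v n) 0).
  { intros e he. destruct (cv_nat_eventually_bounded v b Hv) as [N0 H0].
    pose proof (Cmod_ge_0 b).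
    destruct (Hu (e / (Cmod b + 1))%R ltac:(apply Rdiv_lt_0_compat; lra)) as [N1 H1].
    exists (N0 + N1)%nat. intros n hn.
    replace ((u n - a) * v n - 0) with (v n * (u n - a)) by ring. rewrite Cmod_mult.
    specialize (H0 n ltac:(lia)). specialize (H1 n ltac:(lia)).
    pose proof (mul_lt_of_lt_div _ _ e H H1).
    pose proof (Cmod_ge_0 (u n - a)). nra. }
  replace (a * b) with (0 + a * b) by ring.
  eapply cv_nat_ext; [|apply (cv_nat_lin _ _ 0 b a H0 Hv)]. intros; simpl; ring.
Qed.

Lemma cv_nat_inv (v : nat -> C) (b : C) : b <> 0 -> cv_nat v b -> cv_nat (fun n => / v n) (/ b).
Proof.
  intros hb Hv e he.
  assert (hB : (0 < Cmod b)%R) by (apply Cmod_gt_0; auto).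
  destruct (Hv (Cmod b / 2)%R ltac:(lra)) as [N0 H0].
  destruct (Hv (e * (Cmod b * Cmod b) / 2)%R) as [N1 H1].
  { apply Rdiv_lt_0_compat; [|lra]. apply Rmult_lt_0_compat; [lra|nra]. }
  exists (N0 + N1)%nat. intros n hn. specialize (H0 n ltac:(lia)). specialize (H1 n ltac:(lia)).
  assert (hvn : (Cmod b / 2 <= Cmod (v n))%R).
  { pose proof (Cmod_le_sub_add b (v n)). rewrite Cmod_sub_comm in H. lra. }
  assert (vn0 : v n <> 0) by (intros E; rewrite E, Cmod_0 in hvn; lra).
  replace (/ v n - / b) with ((b - v n) / (v n * b)) by (field; auto).
  rewrite Cmod_div by (apply Cmult_neq_0; auto). rewrite Cmod_mult, Cmod_sub_comm.
  apply (Rmult_lt_reg_r (Cmod (v n) * Cmod b)); [apply Rmult_lt_0_compat; lra|].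
  unfold Rdiv. rewrite Rmult_assoc, Rinv_l by (apply Rgt_not_eq, Rmult_lt_0_compat; lra).
  rewrite Rmult_1_r.
  assert (e * (Cmod b * Cmod b) / 2 <= e * (Cmod (v n) * Cmod b))%R.
  { unfold Rdiv. rewrite Rmult_assoc. apply Rmult_le_compat_l; [lra|]. nra. }
  lra.
Qed.

Lemma cv_nat_div (u v : nat -> C) (a b : C) : b <> 0 ->
  cv_nat u a -> cv_nat v b -> cv_nat (fun n => u n / v n) (a / b).
Proof. intros hb Hu Hv. apply (cv_nat_mult u (fun n => / v n)); auto. apply cv_nat_inv; auto. Qed.

Lemma cv_nat_le (u : nat -> C) (l : C) (B : R) :
  cv_nat u l -> (forall n, Cmod (u n) <= B)%R -> (Cmod l <= B)%R.
Proof.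
  intros H hb. apply Rle_plus_epsilon. intros e he. destruct (H e he) as [N HN].
  specialize (HN N (le_n N)). specialize (hb N).
  pose proof (Cmod_le_sub_add l (u N)). rewrite Cmod_sub_comm in H0. lra.
Qed.

Lemma cv_pinf_iff_nat (u : Z -> C) (l : C) :
  cv_pinf u l <-> cv_nat (fun N => u (Z.of_nat N)) l.
Proof.
  split; intros H e he; destruct (H e he) as [N HN].
  - exists (Z.to_nat N). intros n hn. apply HN. lia.
  - exists (Z.of_nat N). intros n hn. replace n with (Z.of_nat (Z.to_nat n)) by lia. apply HN. lia.
Qed.

Lemma cv_minf_iff_nat (u : Z -> C) (l : C) :
  cv_minf u l <-> cv_nat (fun N => u (- Z.of_nat N)%Z) l.
Proof.
  split; intros H e he; destruct (H e he) as [N HN].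
  - exists (Z.to_nat (- N)). intros n hn. apply HN. lia.
  - exists (- Z.of_nat N)%Z. intros n hn.
    replace n with (- Z.of_nat (Z.to_nat (- n)))%Z by lia. apply HN. lia.
Qed.

Lemma cv_pinf_nat_succ (u : Z -> C) (l : C) :
  cv_pinf u l -> cv_nat (fun N => u (Z.of_nat N + 1)%Z) l.
Proof. intros H e he. destruct (H e he) as [N HN]. exists (Z.to_nat N). intros n hn. apply HN. lia. Qed.

Lemma cv_pinf_ext (u v : Z -> C) (l : C) : (forall n, u n = v n) -> cv_pinf u l -> cv_pinf v l.
Proof. intros H Hu e he. destruct (Hu e he) as [N HN]. exists N. intros n hn. rewrite <- H. auto. Qed.

Lemma cv_minf_ext (u v : Z -> C) (l : C) : (forall n, u n = v n) -> cv_minf u l -> cv_minf v l.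
Proof. intros H Hu e he. destruct (Hu e he) as [N HN]. exists N. intros n hn. rewrite <- H. auto. Qed.

Lemma cv_pinf_div (u v : Z -> C) (a b : C) : b <> 0 ->
  cv_pinf u a -> cv_pinf v b -> cv_pinf (fun n => u n / v n) (a / b).
Proof. rewrite !cv_pinf_iff_nat. apply cv_nat_div. Qed.

Lemma cv_minf_div (u v : Z -> C) (a b : C) : b <> 0 ->
  cv_minf u a -> cv_minf v b -> cv_minf (fun n => u n / v n) (a / b).
Proof. rewrite !cv_minf_iff_nat. apply cv_nat_div. Qed.

Lemma cv_pinf_sub (u v : Z -> C) (a b : C) :
  cv_pinf u a -> cv_pinf v b -> cv_pinf (fun n => u n - v n) (a - b).
Proof. rewrite !cv_pinf_iff_nat. apply cv_nat_sub. Qed.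

Lemma cv_minf_sub (u v : Z -> C) (a b : C) :
  cv_minf u a -> cv_minf v b -> cv_minf (fun n => u n - v n) (a - b).
Proof. rewrite !cv_minf_iff_nat. apply cv_nat_sub. Qed.

Lemma cv_nat_inv_one_plus (u : nat -> C) : cv_nat u 0 -> cv_nat (fun n => / (1 + u n)) 1.
Proof.
  intros hu.
  assert (h1 : cv_nat (fun n => 1 + u n) (1 + 1 * 0)) by
    (eapply cv_nat_ext; [|apply (cv_nat_lin _ _ _ _ 1 (cv_nat_const 1) hu)]; intros; simpl; ring).
  replace (1 + 1 * 0) with (RtoC 1) in h1 by ring.
  pose proof (cv_nat_inv _ _ RtoC_1_neq_0 h1) as h2.
  replace (/ RtoC 1) with (RtoC 1) in h2 by (field; apply RtoC_1_neq_0). exact h2.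
Qed.

Lemma cv_minf_le (u : Z -> C) (l : C) (B : R) :
  cv_minf u l -> (forall n, Cmod (u n) <= B)%R -> (Cmod l <= B)%R.
Proof. rewrite cv_minf_iff_nat. intros H hb. apply (cv_nat_le _ _ _ H). auto. Qed.

Lemma cv_pinf_comb3 (x y z : Z -> C) (a b c w g : C) :
  cv_pinf x a -> cv_pinf y b -> cv_pinf z c ->
  cv_pinf (fun n => (x n - y n - w * z n) * g) ((a - b - w * c) * g).
Proof.
  rewrite !cv_pinf_iff_nat. intros hx hy hz.
  apply (cv_nat_mult _ (fun _ => g)); [|apply cv_nat_const].
  replace (a - b - w * c) with ((a - b) + (- w) * c) by ring.
  eapply cv_nat_ext; [|apply cv_nat_lin; [apply cv_nat_sub; [apply hx|apply hy]|apply hz]].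
  intros; simpl; ring.
Qed.

Lemma cv_minf_comb3 (x y z : Z -> C) (a b c w : C) :
  cv_minf x a -> cv_minf y b -> cv_minf z c ->
  cv_minf (fun n => x n - y n - w * z n) (a - b - w * c).
Proof.
  rewrite !cv_minf_iff_nat. intros hx hy hz.
  replace (a - b - w * c) with ((a - b) + (- w) * c) by ring.
  eapply cv_nat_ext; [|apply cv_nat_lin; [apply cv_nat_sub; [apply hx|apply hy]|apply hz]].
  intros; simpl; ring.
Qed.

Lemma cauchy_rate_limit (u : nat -> C) (K : R) (phi : nat -> R) :
  (0 <= K)%R -> (forall j, 0 <= phi j)%R ->
  (forall j J, (j <= J)%nat -> Cmod (u J - u j) <= K * (phi j - phi J))%R ->
  (forall e, 0 < e -> exists N, forall j, (N <= j)%nat -> phi j < e)%R ->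
  exists L, forall j, (Cmod (u j - L) <= K * phi j)%R.
Proof.
  intros HK Hphi Hu Hlim.
  assert (Hc : forall e, (0 < e)%R -> exists N, forall n m, (N <= n)%nat -> (N <= m)%nat ->
             (Cmod (u n - u m) < e)%R).
  { intros e he. destruct (Hlim (e / (K + 1))%R) as [N HN]; [apply Rdiv_lt_0_compat; lra|].
    assert (Hb : forall a b, (N <= a)%nat -> (a <= b)%nat -> (Cmod (u b - u a) < e)%R).
    { intros a b ha hab. eapply Rle_lt_trans; [apply Hu; auto|].
      pose proof (mul_lt_of_lt_div K _ e HK (HN a ha)). pose proof (Hphi a). pose proof (Hphi b). nra. }
    exists N. intros n m hn hm. destruct (Nat.le_ge_cases n m).
    - rewrite Cmod_sub_comm. auto.
    - auto. }
  assert (Hre : Cauchy_crit (fun n => Re (u n))).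
  { intros e he. destruct (Hc e he) as [N HN]. exists N. intros n m hn hm.
    eapply Rle_lt_trans; [|apply (HN n m hn hm)].
    eapply Rle_trans; [|apply re_le_Cmod]. right. destruct (u n), (u m); reflexivity. }
  assert (Him : Cauchy_crit (fun n => Im (u n))).
  { intros e he. destruct (Hc e he) as [N HN]. exists N. intros n m hn hm.
    eapply Rle_lt_trans; [|apply (HN n m hn hm)].
    eapply Rle_trans; [|apply Rmax_Cmod]. eapply Rle_trans; [|apply Rmax_r].
    right. destruct (u n), (u m); reflexivity. }
  destruct (Rcomplete.R_complete _ Hre) as [l1 Hl1].
  destruct (Rcomplete.R_complete _ Him) as [l2 Hl2].
  exists (l1, l2). intros j. apply Rle_plus_epsilon. intros e he.
  destruct (Hl1 (e/2)%R ltac:(lra)) as [N1 HN1].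
  destruct (Hl2 (e/2)%R ltac:(lra)) as [N2 HN2].
  set (J := (j + N1 + N2)%nat).
  eapply Rle_trans; [apply (Cmod_sub_triangle _ (u J))|].
  assert (Cmod (u j - u J) <= K * phi j)%R.
  { rewrite Cmod_sub_comm. eapply Rle_trans; [apply Hu; unfold J; lia|].
    specialize (Hphi J). nra. }
  assert (Cmod (u J - (l1, l2)) <= e)%R.
  { eapply Rle_trans; [apply Cmod_le_Re_Im|].
    specialize (HN1 J ltac:(unfold J; lia)). specialize (HN2 J ltac:(unfold J; lia)).
    unfold Rdist in *. revert HN1 HN2. destruct (u J) as [a b]. simpl. unfold Rminus. lra. }
  lra.
Qed.

(** * A summable weight and a discrete Gronwall inequality *)

(** [mu] is a positive weight of size about [1/n^2] whose tail sums [Psi n = sum_(k >= n) mu k]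
    are explicit; [Phi] and [nu] are their three-term versions, which absorb the index shifts
    of the sources met below. *)
Definition Psi (n : Z) : R :=
  if (0 <=? n)%Z then (/ (IZR n + 1))%R else (3 - / (1 - IZR n))%R.
Definition mu (n : Z) : R := (Psi n - Psi (n + 1))%R.
Definition Phi (n : Z) : R := (Psi n + Psi (n + 1) + Psi (n + 2))%R.
Definition nu (n : Z) : R := (Phi n - Phi (n + 1))%R.

Lemma Psi_bounds (n : Z) : (0 <= Psi n <= 3)%R.
Proof.
  unfold Psi. destruct (Z.leb_spec 0 n) as [h|h].
  - apply IZR_le in h.
    assert (/ (IZR n + 1) <= 1)%R by (rewrite <- Rinv_1; apply Rinv_le_contravar; lra).
    pose proof (Rinv_0_lt_compat (IZR n + 1) ltac:(lra)). lra.
  - apply IZR_lt in h.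
    assert (/ (1 - IZR n) <= 1)%R by (rewrite <- Rinv_1; apply Rinv_le_contravar; lra).
    pose proof (Rinv_0_lt_compat (1 - IZR n) ltac:(lra)). lra.
Qed.

Lemma mu_ge_inv_sq (n : Z) : (/ (2 * (IZR (Z.abs n) + 1) ^ 2) <= mu n)%R.
Proof.
  unfold mu, Psi. rewrite plus_IZR.
  destruct (Z.leb_spec 0 n) as [h|h]; destruct (Z.leb_spec 0 (n+1)) as [h'|h']; try lia.
  - rewrite Z.abs_eq by lia. apply IZR_le in h.
    replace (/ (IZR n + 1) - / (IZR n + IZR 1 + 1))%R with (/ ((IZR n + 1) * (IZR n + 2)))%R
      by (simpl; field; lra).
    apply Rinv_le_contravar; [apply Rmult_lt_0_compat; lra|]. simpl. nra.
  - assert (n = -1)%Z by lia. subst. simpl.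
    replace (3 - / (1 - -1) - / (-1 + 1 + 1))%R with (3/2)%R by field.
    replace (/ (2 * (1 + 1) ^ 2))%R with (/8)%R by (simpl; field). lra.
  - rewrite Z.abs_neq, opp_IZR by lia. assert (hn : (IZR n <= -2)%R) by (apply IZR_le; lia).
    replace (3 - / (1 - IZR n) - (3 - / (1 - (IZR n + 1))))%R with (/ ((- IZR n) * (1 - IZR n)))%R
      by (field; lra).
    apply Rinv_le_contravar; [apply Rmult_lt_0_compat; lra|]. simpl. nra.
Qed.

Lemma mu_pos (n : Z) : (0 < mu n)%R.
Proof.
  eapply Rlt_le_trans; [|apply mu_ge_inv_sq]. apply Rinv_0_lt_compat.
  pose proof (IZR_le 0 (Z.abs n) ltac:(lia)). nra.
Qed.

Lemma mu_le_3 (n : Z) : (mu n <= 3)%R.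
Proof. unfold mu. pose proof (Psi_bounds n). pose proof (Psi_bounds (n+1)). lra. Qed.

Lemma nu_sum_mu (n : Z) : nu n = (mu n + mu (n+1) + mu (n+2))%R.
Proof.
  unfold nu, Phi, mu. replace (n + 1 + 1)%Z with (n+2)%Z by lia.
  replace (n + 2 + 1)%Z with (n+1+2)%Z by lia. ring.
Qed.

Lemma mu_le_nu (n : Z) : (mu n <= nu n)%R.
Proof. rewrite nu_sum_mu. pose proof (mu_pos (n+1)). pose proof (mu_pos (n+2)). lra. Qed.

Lemma nu_ge_0 (n : Z) : (0 <= nu n)%R.
Proof. pose proof (mu_le_nu n). pose proof (mu_pos n). lra. Qed.

Lemma Psi_antitone (m n : Z) : (m <= n)%Z -> (Psi n <= Psi m)%R.
Proof.
  intros h. replace n with (m + Z.of_nat (Z.to_nat (n - m)))%Z by lia.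
  induction (Z.to_nat (n - m)) as [|k IH].
  - rewrite Z.add_0_r. lra.
  - rewrite Nat2Z.inj_succ, Z.add_succ_r, <- Z.add_1_r.
    pose proof (mu_pos (m + Z.of_nat k)). unfold mu in H. lra.
Qed.

Lemma Phi_bounds (n : Z) : (0 <= Phi n <= 9)%R.
Proof. unfold Phi. pose proof (Psi_bounds n). pose proof (Psi_bounds (n+1)). pose proof (Psi_bounds (n+2)). lra. Qed.

Lemma Phi_antitone (m n : Z) : (m <= n)%Z -> (Phi n <= Phi m)%R.
Proof.
  intros h. unfold Phi. pose proof (Psi_antitone m n h).
  pose proof (Psi_antitone (m+1) (n+1) ltac:(lia)). pose proof (Psi_antitone (m+2) (n+2) ltac:(lia)). lra.
Qed.

Lemma Psi_lim_pinf (e : R) : (0 < e)%R -> exists N : Z, forall n, (N <= n)%Z -> (Psi n < e)%R.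
Proof.
  intros he. destruct (archimed (/ e)) as [h1 _]. pose proof (Rinv_0_lt_compat e he).
  exists (Z.max 0 (up (/ e))). intros n hn.
  unfold Psi. destruct (Z.leb_spec 0 n) as [h|h]; [|lia].
  assert (IZR (up (/e)) <= IZR n)%R by (apply IZR_le; lia).
  replace e with (/ / e)%R by (field; lra).
  apply Rinv_lt_contravar; [apply Rmult_lt_0_compat|]; lra.
Qed.

Lemma Psi_lim_minf (e : R) : (0 < e)%R -> exists N : Z, forall n, (n <= N)%Z -> (3 - e < Psi n)%R.
Proof.
  intros he. destruct (archimed (/ e)) as [h1 _]. pose proof (Rinv_0_lt_compat e he).
  exists (Z.min (-1) (- up (/ e))). intros n hn.
  unfold Psi. destruct (Z.leb_spec 0 n) as [h|h]; [lia|].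
  assert (IZR (up (/e)) <= - IZR n)%R by (rewrite <- opp_IZR; apply IZR_le; lia).
  enough (/ (1 - IZR n) < e)%R by lra.
  replace e with (/ / e)%R by (field; lra).
  apply Rinv_lt_contravar; [apply Rmult_lt_0_compat|]; lra.
Qed.

Lemma Phi_lim_pinf (e : R) : (0 < e)%R -> exists N : Z, forall n, (N <= n)%Z -> (Phi n < e)%R.
Proof.
  intros he. destruct (Psi_lim_pinf (e/3)%R ltac:(lra)) as [N HN]. exists N. intros n hn.
  unfold Phi. pose proof (HN n hn). pose proof (HN (n+1)%Z ltac:(lia)). pose proof (HN (n+2)%Z ltac:(lia)). lra.
Qed.

Lemma Phi_lim_minf (e : R) : (0 < e)%R -> exists N : Z, forall n, (n <= N)%Z -> (9 - e < Phi n)%R.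
Proof.
  intros he. destruct (Psi_lim_minf (e/3)%R ltac:(lra)) as [N HN]. exists (N - 2)%Z. intros n hn.
  unfold Phi. pose proof (HN n ltac:(lia)). pose proof (HN (n+1)%Z ltac:(lia)). pose proof (HN (n+2)%Z ltac:(lia)). lra.
Qed.

Lemma le_0_of_le_mul_Phi (x K : R) (n : Z) : (0 <= K)%R ->
  (forall j : nat, x <= K * Phi (n + Z.of_nat j))%R -> (x <= 0)%R.
Proof.
  intros hK H. apply Rle_plus_epsilon. intros e he.
  destruct (Phi_lim_pinf (e / (K + 1))%R ltac:(apply Rdiv_lt_0_compat; lra)) as [N HN].
  set (j := Z.to_nat (N - n)). specialize (H j). specialize (HN (n + Z.of_nat j)%Z ltac:(unfold j; lia)).
  pose proof (mul_lt_of_lt_div K _ e hK HN). pose proof (Phi_bounds (n + Z.of_nat j)). nra.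
Qed.

Lemma cv_pinf_of_le_mul_Phi (u : Z -> C) (l : C) (K : R) : (0 <= K)%R ->
  (forall n, Cmod (u n - l) <= K * Phi n)%R -> cv_pinf u l.
Proof.
  intros hK H e he.
  destruct (Phi_lim_pinf (e / (K + 1))%R ltac:(apply Rdiv_lt_0_compat; lra)) as [N HN].
  exists N. intros n hn. pose proof (mul_lt_of_lt_div K _ e hK (HN n hn)).
  pose proof (Phi_bounds n). pose proof (H n). nra.
Qed.

Lemma mu_lim (e : R) : (0 < e)%R -> exists N : Z, forall n, (N <= Z.abs n)%Z -> (mu n < e)%R.
Proof.
  intros he. destruct (Psi_lim_pinf e he) as [N1 H1]. destruct (Psi_lim_minf e he) as [N2 H2].
  exists (Z.max (Z.abs N1) (Z.abs N2 + 1)). intros n hn. unfold mu.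
  destruct (Z_le_gt_dec 0 n).
  - specialize (H1 n ltac:(lia)). pose proof (Psi_bounds (n+1)). lra.
  - specialize (H2 (n+1)%Z ltac:(lia)). pose proof (Psi_bounds n). lra.
Qed.

Lemma Cmod_le_mu_cv (x : Z -> C) (K : R) : (forall n, Cmod (x n) <= K * mu n)%R ->
  cv_pinf x 0 /\ cv_minf x 0.
Proof.
  intros H.
  assert (A : forall e, (0 < e)%R -> exists N : Z, forall n, (N <= Z.abs n)%Z -> (Cmod (x n - 0) < e)%R).
  { intros e he. pose proof (Rabs_pos K).
    destruct (mu_lim (e / (Rabs K + 1))%R ltac:(apply Rdiv_lt_0_compat; lra)) as [N HN].
    exists N. intros n hn. replace (x n - 0) with (x n) by ring.
    pose proof (mul_lt_of_lt_div _ _ e H0 (HN n hn)). pose proof (H n).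
    pose proof (mu_pos n). pose proof (Rle_abs K). nra. }
  split; intros e he; destruct (A e he) as [N HN];
    [exists (Z.abs N) | exists (- Z.abs N)%Z]; intros n hn; apply HN; lia.
Qed.

Lemma gronwall (F : Z -> R) (ka S : R) :
  (0 <= ka)%R -> (0 <= S)%R -> (forall n, 0 <= F n)%R ->
  (forall n, F n <= (1 + ka * mu n) * F (n+1)%Z + S * nu n)%R ->
  forall (k : nat) n, (F n <= exp (ka * (Psi n - Psi (n + Z.of_nat k))) *
                           (F (n + Z.of_nat k)%Z + S * (Phi n - Phi (n + Z.of_nat k))))%R.
Proof.
  intros hka hS hF Hrec k. induction k as [|k IH]; intros n.
  - rewrite Z.add_0_r, !Rminus_diag, Rmult_0_r, exp_0. lra.
  - rewrite Nat2Z.inj_succ. replace (n + Z.succ (Z.of_nat k))%Z with (n + 1 + Z.of_nat k)%Z by lia.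
    specialize (IH (n+1)%Z). set (m := (n + 1 + Z.of_nat k)%Z) in *.
    pose proof (mu_pos n) as hmu. pose proof (nu_ge_0 n). pose proof (hF (n+1)%Z). pose proof (hF m).
    assert (hPsi : (Psi m <= Psi (n+1))%R) by (apply Psi_antitone; unfold m; lia).
    assert (hPhi : (Phi m <= Phi (n+1))%R) by (apply Phi_antitone; unfold m; lia).
    set (E1 := exp (ka * (Psi (n + 1) - Psi m))) in *.
    set (E0 := exp (ka * mu n)).
    assert (hE1 : (1 <= E1)%R) by (rewrite <- exp_0; apply exp_le_mono; nra).
    assert (hE0 : (1 + ka * mu n <= E0)%R) by apply exp_ineq1_le.
    replace (exp (ka * (Psi n - Psi m))) with (E0 * E1)%R
      by (unfold E0, E1; rewrite <- exp_plus; f_equal; unfold mu; ring).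
    replace (Phi n - Phi m)%R with (nu n + (Phi (n + 1) - Phi m))%R by (unfold nu; ring).
    pose proof (Hrec n).
    assert ((1 + ka * mu n) * F (n + 1)%Z <= E0 * (E1 * (F m + S * (Phi (n + 1) - Phi m))))%R.
    { eapply Rle_trans; [apply Rmult_le_compat_r; [auto|apply hE0]|].
      apply Rmult_le_compat_l; nra. }
    assert (1 <= E0 * E1)%R by (assert (0 <= ka * mu n)%R by nra; nra).
    assert (S * nu n <= E0 * E1 * (S * nu n))%R by (assert (0 <= S * nu n)%R by nra; nra).
    nra.
Qed.

Lemma gronwall_bound (F : Z -> R) (ka S B : R) :
  (0 <= ka)%R -> (0 <= S)%R -> (forall n, 0 <= F n)%R ->
  (forall n, F n <= (1 + ka * mu n) * F (n+1)%Z + S * nu n)%R ->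
  (forall eta, 0 < eta -> forall n, exists m, (n <= m)%Z /\ F m <= B + eta)%R ->
  forall n, (F n <= exp (3 * ka) * (B + 9 * S))%R.
Proof.
  intros hka hS hF Hrec Hlim n. apply Rle_plus_epsilon. intros e he.
  pose proof (exp_pos (3 * ka)) as hE3.
  destruct (Hlim (e / exp (3 * ka))%R ltac:(apply Rdiv_lt_0_compat; lra) n) as [m [hnm hm]].
  pose proof (gronwall F ka S hka hS hF Hrec (Z.to_nat (m - n)) n) as G.
  replace (n + Z.of_nat (Z.to_nat (m - n)))%Z with m in G by lia.
  assert (hE : (exp (ka * (Psi n - Psi m)) <= exp (3 * ka))%R).
  { apply exp_le_mono. pose proof (Psi_bounds n); pose proof (Psi_bounds m). nra. }
  pose proof (Phi_bounds n); pose proof (Phi_bounds m); pose proof (Phi_antitone n m hnm).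
  pose proof (hF m).
  eapply Rle_trans; [apply G|].
  eapply Rle_trans; [apply Rmult_le_compat_r; [nra|apply hE]|].
  replace (exp (3 * ka) * (B + 9 * S) + e)%R
    with (exp (3 * ka) * ((B + e / exp (3 * ka)) + 9 * S))%R by (field; lra).
  apply Rmult_le_compat_l; nra.
Qed.

Lemma increments_telescope (g : Z -> C) (K : R) :
  (forall n, Cmod (g n - g (n+1)%Z) <= K * nu n)%R ->
  forall m n, (m <= n)%Z -> (Cmod (g n - g m) <= K * (Phi m - Phi n))%R.
Proof.
  intros H m n hmn. replace n with (m + Z.of_nat (Z.to_nat (n - m)))%Z by lia.
  induction (Z.to_nat (n - m)) as [|k IH].
  - rewrite Z.add_0_r, !Rminus_diag, Rmult_0_r. replace (g m - g m) with (RtoC 0) by ring.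
    rewrite Cmod_0. lra.
  - rewrite Nat2Z.inj_succ, Z.add_succ_r, <- Z.add_1_r. set (p := (m + Z.of_nat k)%Z) in *.
    eapply Rle_trans; [apply (Cmod_sub_triangle _ (g p))|]. rewrite Cmod_sub_comm.
    pose proof (H p). unfold nu in H0. lra.
Qed.

Lemma cv_minf_of_increments (g : Z -> C) (K : R) : (0 <= K)%R ->
  (forall n, Cmod (g n - g (n+1)%Z) <= K * nu n)%R -> exists L, cv_minf g L.
Proof.
  intros hK Hg. pose proof (increments_telescope g K Hg) as Ht.
  destruct (cauchy_rate_limit (fun j => g (- Z.of_nat j)%Z) K (fun j => 9 - Phi (- Z.of_nat j))%R hK)
    as [L HL].
  - intros j. pose proof (Phi_bounds (- Z.of_nat j)). lra.
  - intros j J hj. rewrite Cmod_sub_comm. eapply Rle_trans; [apply Ht; lia|]. right; ring.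
  - intros e he. destruct (Phi_lim_minf e he) as [N HN]. exists (Z.to_nat (- N)). intros j hj.
    specialize (HN (- Z.of_nat j)%Z ltac:(lia)). lra.
  - exists L. apply cv_minf_iff_nat. intros e he.
    destruct (Phi_lim_minf (e / (K + 1))%R ltac:(apply Rdiv_lt_0_compat; lra)) as [N HN].
    exists (Z.to_nat (- N)). intros j hj. eapply Rle_lt_trans; [apply HL|].
    specialize (HN (- Z.of_nat j)%Z ltac:(lia)).
    pose proof (mul_lt_of_lt_div K (9 - Phi (- Z.of_nat j)) e hK ltac:(lra)).
    pose proof (Phi_bounds (- Z.of_nat j)). nra.
Qed.

(** * A perturbed two-dimensional system *)

Definition vnorm (v : C * C) : R := Rmax (Cmod (fst v)) (Cmod (snd v)).
Definition vadd (u v : C * C) : C * C := (fst u + fst v, snd u + snd v).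
Definition vsub (u v : C * C) : C * C := (fst u - fst v, snd u - snd v).
Definition cv_pinf2 (f : Z -> C * C) (l : C * C) : Prop :=
  cv_pinf (fun n => fst (f n)) (fst l) /\ cv_pinf (fun n => snd (f n)) (snd l).

Lemma vnorm_fst (v : C * C) : (Cmod (fst v) <= vnorm v)%R.
Proof. apply Rmax_l. Qed.

Lemma vnorm_snd (v : C * C) : (Cmod (snd v) <= vnorm v)%R.
Proof. apply Rmax_r. Qed.

Lemma vnorm_ge_0 (v : C * C) : (0 <= vnorm v)%R.
Proof. pose proof (vnorm_fst v). pose proof (Cmod_ge_0 (fst v)). lra. Qed.

Lemma vnorm_le (v : C * C) (B : R) : (Cmod (fst v) <= B)%R -> (Cmod (snd v) <= B)%R -> (vnorm v <= B)%R.
Proof. apply Rmax_lub. Qed.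

Lemma vnorm_add (u v : C * C) : (vnorm (vadd u v) <= vnorm u + vnorm v)%R.
Proof.
  pose proof (vnorm_fst u); pose proof (vnorm_fst v); pose proof (vnorm_snd u); pose proof (vnorm_snd v).
  apply vnorm_le; simpl; (eapply Rle_trans; [apply Cmod_triangle|]); lra.
Qed.

Lemma vnorm_sub_triangle (a b c : C * C) : (vnorm (vsub a c) <= vnorm (vsub a b) + vnorm (vsub b c))%R.
Proof.
  pose proof (vnorm_fst (vsub a b)); pose proof (vnorm_fst (vsub b c)).
  pose proof (vnorm_snd (vsub a b)); pose proof (vnorm_snd (vsub b c)).
  simpl in *. apply vnorm_le; simpl.
  - eapply Rle_trans; [apply (Cmod_sub_triangle _ (fst b))|]. lra.
  - eapply Rle_trans; [apply (Cmod_sub_triangle _ (snd b))|]. lra.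
Qed.

Lemma vnorm_sub_comm (a b : C * C) : vnorm (vsub a b) = vnorm (vsub b a).
Proof. unfold vnorm, vsub; simpl. rewrite (Cmod_sub_comm (fst a)), (Cmod_sub_comm (snd a)). auto. Qed.

Lemma vnorm_sub_le_0 (u v : C * C) : (vnorm (vsub u v) <= 0)%R -> u = v.
Proof.
  intros h. pose proof (vnorm_fst (vsub u v)). pose proof (vnorm_snd (vsub u v)).
  pose proof (Cmod_ge_0 (fst (vsub u v))). pose proof (Cmod_ge_0 (snd (vsub u v))).
  apply injective_projections; apply Cmod_eq_0_sub; simpl in *; lra.
Qed.

Lemma vsub_vadd (a b c : C * C) : vsub (vadd a c) (vadd b c) = vsub a b.
Proof. unfold vsub, vadd; apply injective_projections; simpl; ring. Qed.

Lemma Cmod_lin2_vnorm (x y : C) (v : C * C) :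
  (Cmod (x * fst v + y * snd v) <= (Cmod x + Cmod y) * vnorm v)%R.
Proof.
  eapply Rle_trans; [apply Cmod_lin2|].
  pose proof (vnorm_fst v). pose proof (vnorm_snd v). pose proof (Cmod_ge_0 x). pose proof (Cmod_ge_0 y).
  pose proof (Cmod_ge_0 (fst v)). pose proof (Cmod_ge_0 (snd v)). nra.
Qed.

Lemma Cmod_add_mul_le (x y w : C) (c : R) :
  (Cmod x <= c)%R -> (Cmod y <= c)%R -> (Cmod w <= 1)%R -> (Cmod (x + w * y) <= 2 * c)%R.
Proof.
  intros. eapply Rle_trans; [apply Cmod_triangle|]. rewrite Cmod_mult.
  pose proof (Cmod_ge_0 y). pose proof (Cmod_ge_0 w). nra.
Qed.

Section PerturbedSystem.

(** [a_ij] and [b_ij] are the entries of [A_n] and [B_n] in the transfer matrix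
    [M_n(w) = A_n + w B_n] of the system [f n = M_n(w) f (n+1) + s n]. *)
Variables a11 a12 a21 a22 b11 b12 b21 b22 : Z -> C.
Variable C0 : R.
Hypothesis HC0 : (0 <= C0)%R.
Hypothesis Ha11 : forall n, (Cmod (a11 n) <= C0 * mu n)%R.
Hypothesis Ha12 : forall n, (Cmod (a12 n) <= C0 * mu n)%R.
Hypothesis Ha21 : forall n, (Cmod (a21 n) <= C0 * mu n)%R.
Hypothesis Ha22 : forall n, (Cmod (a22 n - 1) <= C0 * mu n)%R.
Hypothesis Hb11 : forall n, (Cmod (b11 n - 1) <= C0 * mu n)%R.
Hypothesis Hb12 : forall n, (Cmod (b12 n) <= C0 * mu n)%R.
Hypothesis Hb21 : forall n, (Cmod (b21 n) <= C0 * mu n)%R.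
Hypothesis Hb22 : forall n, (Cmod (b22 n) <= C0 * mu n)%R.

Definition Mmul (w : C) (n : Z) (v : C * C) : C * C :=
  ((a11 n + w * b11 n) * fst v + (a12 n + w * b12 n) * snd v,
   (a21 n + w * b21 n) * fst v + (a22 n + w * b22 n) * snd v).
Definition Bmul (n : Z) (v : C * C) : C * C :=
  (b11 n * fst v + b12 n * snd v, b21 n * fst v + b22 n * snd v).
Definition Bsource (v : Z -> C * C) (n : Z) : C * C := Bmul n (v (n + 1)%Z).
Definition no_source (n : Z) : C * C := (RtoC 0, RtoC 0).
Definition sys_sol (w : C) (s f : Z -> C * C) : Prop :=
  forall n, f n = vadd (Mmul w n (f (n+1)%Z)) (s n).

Definition kappa : R := 4 * C0.
Definition growth : R := exp (3 * kappa).

Lemma kappa_ge_0 : (0 <= kappa)%R.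
Proof. unfold kappa; lra. Qed.

Lemma growth_ge_1 : (1 <= growth)%R.
Proof. unfold growth. rewrite <- exp_0. apply exp_le_mono. pose proof kappa_ge_0. lra. Qed.

Lemma no_source_bound (n : Z) : (vnorm (no_source n) <= 0 * nu n)%R.
Proof. unfold vnorm, no_source; simpl. rewrite Cmod_0, Rmax_left; lra. Qed.

Lemma coef11_bound (w : C) (n : Z) : (Cmod w <= 1)%R -> (Cmod (a11 n + w * b11 n) <= 1 + 2 * C0 * mu n)%R.
Proof.
  intros hw. replace (a11 n + w * b11 n) with (w + (a11 n + w * (b11 n - 1))) by ring.
  eapply Rle_trans; [apply Cmod_triangle|].
  pose proof (Cmod_add_mul_le _ _ w _ (Ha11 n) (Hb11 n) hw). lra.
Qed.

Lemma coef12_bound (w : C) (n : Z) : (Cmod w <= 1)%R -> (Cmod (a12 n + w * b12 n) <= 2 * (C0 * mu n))%R.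
Proof. apply Cmod_add_mul_le; auto. Qed.

Lemma coef21_bound (w : C) (n : Z) : (Cmod w <= 1)%R -> (Cmod (a21 n + w * b21 n) <= 2 * (C0 * mu n))%R.
Proof. apply Cmod_add_mul_le; auto. Qed.

Lemma coef22_sub_bound (w : C) (n : Z) : (Cmod w <= 1)%R ->
  (Cmod (a22 n + w * b22 n - 1) <= 2 * (C0 * mu n))%R.
Proof.
  intros hw. replace (a22 n + w * b22 n - 1) with ((a22 n - 1) + w * b22 n) by ring.
  apply Cmod_add_mul_le; auto.
Qed.

Lemma coef22_bound (w : C) (n : Z) : (Cmod w <= 1)%R -> (Cmod (a22 n + w * b22 n) <= 1 + 2 * C0 * mu n)%R.
Proof.
  intros hw. replace (a22 n + w * b22 n) with (1 + (a22 n + w * b22 n - 1)) by ring.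
  eapply Rle_trans; [apply Cmod_triangle|]. rewrite Cmod_1. pose proof (coef22_sub_bound w n hw). lra.
Qed.

Lemma Mmul_bound (w : C) (n : Z) (v : C * C) : (Cmod w <= 1)%R -> (vnorm (Mmul w n v) <= (1 + kappa * mu n) * vnorm v)%R.
Proof.
  intros hw. unfold kappa. pose proof (vnorm_ge_0 v).
  pose proof (coef11_bound w n hw). pose proof (coef12_bound w n hw).
  pose proof (coef21_bound w n hw). pose proof (coef22_bound w n hw).
  apply vnorm_le; simpl; (eapply Rle_trans; [apply Cmod_lin2_vnorm|]); apply Rmult_le_compat_r; lra.
Qed.

Lemma Mmul_snd_sub_bound (w : C) (n : Z) (v : C * C) : (Cmod w <= 1)%R ->
  (Cmod (snd (Mmul w n v) - snd v) <= 4 * C0 * mu n * vnorm v)%R.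
Proof.
  intros hw. pose proof (vnorm_ge_0 v).
  replace (snd (Mmul w n v) - snd v)
    with ((a21 n + w * b21 n) * fst v + (a22 n + w * b22 n - 1) * snd v) by (simpl; ring).
  eapply Rle_trans; [apply Cmod_lin2_vnorm|].
  pose proof (coef21_bound w n hw). pose proof (coef22_sub_bound w n hw). nra.
Qed.

Lemma Mmul_snd_axis_sub_bound (w : C) (n : Z) (c : C) : (Cmod w <= 1)%R ->
  (vnorm (vsub (Mmul w n (RtoC 0, c)) (RtoC 0, c)) <= 2 * C0 * mu n * Cmod c)%R.
Proof.
  intros hw. pose proof (Cmod_ge_0 c). apply vnorm_le; simpl.
  - replace ((a11 n + w * b11 n) * 0 + (a12 n + w * b12 n) * c - 0)
      with ((a12 n + w * b12 n) * c) by ring.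
    rewrite Cmod_mult. pose proof (coef12_bound w n hw). nra.
  - replace ((a21 n + w * b21 n) * 0 + (a22 n + w * b22 n) * c - c)
      with ((a22 n + w * b22 n - 1) * c) by ring.
    rewrite Cmod_mult. pose proof (coef22_sub_bound w n hw). nra.
Qed.

Lemma Mmul_vsub (w : C) (n : Z) (u v : C * C) : vsub (Mmul w n u) (Mmul w n v) = Mmul w n (vsub u v).
Proof. unfold Mmul, vsub; simpl. apply injective_projections; simpl; ring. Qed.

Lemma Bmul_fst_bound (n : Z) (x : C * C) :
  (Cmod (fst (Bmul n x)) <= (1 + 3 * C0) * Cmod (fst x) + C0 * mu n * vnorm x)%R.
Proof.
  unfold Bmul; simpl. eapply Rle_trans; [apply Cmod_lin2|].
  assert (Cmod (b11 n) <= 1 + 3 * C0)%R.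
  { pose proof (Cmod_le_sub_add (b11 n) 1). rewrite Cmod_1 in H.
    pose proof (Hb11 n). pose proof (mu_le_3 n). pose proof (mu_pos n). nra. }
  pose proof (Hb12 n). pose proof (vnorm_snd x).
  pose proof (Cmod_ge_0 (fst x)). pose proof (Cmod_ge_0 (snd x)). pose proof (Cmod_ge_0 (b12 n)).
  apply Rplus_le_compat; [apply Rmult_le_compat_r|apply Rmult_le_compat]; auto.
Qed.

Lemma Bmul_snd_bound (n : Z) (x : C * C) : (Cmod (snd (Bmul n x)) <= 2 * C0 * mu n * vnorm x)%R.
Proof.
  unfold Bmul; simpl. eapply Rle_trans; [apply Cmod_lin2_vnorm|].
  pose proof (Hb21 n). pose proof (Hb22 n). pose proof (vnorm_ge_0 x). nra.
Qed.

Lemma sys_sol_bounded (w : C) (s : Z -> C * C) (S : R) (f : Z -> C * C) (l : C * C) : (Cmod w <= 1)%R -> (0 <= S)%R ->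
  (forall n, vnorm (s n) <= S * nu n)%R -> sys_sol w s f -> cv_pinf2 f l ->
  forall n, (vnorm (f n) <= growth * (vnorm l + 9 * S))%R.
Proof.
  intros hw hS hs Hf [Hl1 Hl2].
  apply (gronwall_bound (fun n => vnorm (f n)) kappa S (vnorm l) kappa_ge_0 hS).
  - intros; apply vnorm_ge_0.
  - intros n. rewrite (Hf n) at 1. eapply Rle_trans; [apply vnorm_add|].
    pose proof (Mmul_bound w n (f (n+1)%Z) hw). pose proof (hs n). lra.
  - intros eta heta n.
    destruct (Hl1 eta heta) as [N1 H1]. destruct (Hl2 eta heta) as [N2 H2].
    set (m := Z.max n (Z.max N1 N2)).
    specialize (H1 m ltac:(unfold m; lia)). specialize (H2 m ltac:(unfold m; lia)).
    exists m. split; [unfold m; lia|].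
    pose proof (vnorm_fst l). pose proof (vnorm_snd l).
    pose proof (Cmod_le_sub_add (fst (f m)) (fst l)). pose proof (Cmod_le_sub_add (snd (f m)) (snd l)).
    apply vnorm_le; lra.
Qed.

Lemma sys_sol_snd_cv_minf (w : C) (s : Z -> C * C) (S B : R) (f : Z -> C * C) : (Cmod w <= 1)%R -> (0 <= S)%R -> (0 <= B)%R ->
  (forall n, vnorm (s n) <= S * nu n)%R -> sys_sol w s f -> (forall n, vnorm (f n) <= B)%R ->
  exists L, cv_minf (fun n => snd (f n)) L.
Proof.
  intros hw hS hB hs Hf Hb.
  apply (cv_minf_of_increments _ (4 * C0 * B + S)); [nra|]. intros n.
  rewrite (Hf n) at 1. set (x := f (n+1)%Z).
  replace (snd (vadd (Mmul w n x) (s n)) - snd x) with ((snd (Mmul w n x) - snd x) + snd (s n))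
    by (simpl; ring).
  eapply Rle_trans; [apply Cmod_triangle|].
  pose proof (Mmul_snd_sub_bound w n x hw). pose proof (vnorm_snd (s n)). pose proof (hs n).
  pose proof (Hb (n+1)%Z). pose proof (mu_le_nu n). pose proof (mu_pos n). pose proof (vnorm_ge_0 x).
  assert (4 * C0 * mu n * vnorm x <= 4 * C0 * nu n * B)%R
    by (apply Rmult_le_compat; [nra|auto|nra|auto]).
  nra.
Qed.

Lemma sys_sol0_fst_bound (s f : Z -> C * C) (B : R) (n : Z) : sys_sol 0 s f -> (forall m, vnorm (f m) <= B)%R ->
  (Cmod (fst (f n)) <= 2 * C0 * B * mu n + Cmod (fst (s n)))%R.
Proof.
  intros Hf Hb. rewrite (Hf n). unfold vadd, Mmul; simpl.
  rewrite !Cmult_0_l, !Cplus_0_r.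
  eapply Rle_trans; [apply Cmod_triangle|].
  pose proof (Cmod_lin2_vnorm (a11 n) (a12 n) (f (n+1)%Z)).
  pose proof (Ha11 n). pose proof (Ha12 n). pose proof (Hb (n+1)%Z). pose proof (mu_pos n).
  assert ((Cmod (a11 n) + Cmod (a12 n)) * vnorm (f (n + 1)%Z) <= 2 * C0 * mu n * B)%R
    by (apply Rmult_le_compat; [pose proof (Cmod_ge_0 (a11 n)); pose proof (Cmod_ge_0 (a12 n)); lra
                               |apply vnorm_ge_0|lra|auto]).
  lra.
Qed.

Lemma Bsource_bound (g : Z -> C * C) (G B : R) : (0 <= G)%R -> (0 <= B)%R ->
  (forall m, Cmod (fst (g m)) <= G * (mu m + mu (m+1)))%R -> (forall m, vnorm (g m) <= B)%R ->
  forall n, (vnorm (Bsource g n) <= ((1 + 3 * C0) * G + 2 * C0 * B) * nu n)%R.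
Proof.
  intros hG hB hg hb n. unfold Bsource. rewrite nu_sum_mu.
  pose proof (mu_pos n). pose proof (mu_pos (n+1)). pose proof (mu_pos (n+2)).
  pose proof (hg (n+1)%Z) as h1. replace (n + 1 + 1)%Z with (n+2)%Z in h1 by lia.
  pose proof (hb (n+1)%Z). pose proof (vnorm_ge_0 (g (n+1)%Z)).
  assert (C0 * mu n * vnorm (g (n + 1)%Z) <= C0 * mu n * B)%R by (apply Rmult_le_compat_l; nra).
  apply vnorm_le.
  - eapply Rle_trans; [apply Bmul_fst_bound|].
    assert ((1 + 3 * C0) * Cmod (fst (g (n + 1)%Z)) <= (1 + 3 * C0) * (G * (mu (n + 1) + mu (n + 2))))%R
      by (apply Rmult_le_compat_l; lra).
    assert (0 <= (1 + 3 * C0) * G * mu n)%R by (apply Rmult_le_pos; [apply Rmult_le_pos|]; lra).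
    assert (0 <= C0 * B * mu n)%R by (apply Rmult_le_pos; nra).
    assert (0 <= C0 * B * mu (n+1))%R by (apply Rmult_le_pos; nra).
    assert (0 <= C0 * B * mu (n+2))%R by (apply Rmult_le_pos; nra).
    nra.
  - eapply Rle_trans; [apply Bmul_snd_bound|].
    assert (0 <= G * (mu n + mu (n+1) + mu (n+2)))%R by (apply Rmult_le_pos; lra).
    assert (0 <= C0 * B * mu (n+1))%R by (apply Rmult_le_pos; nra).
    assert (0 <= C0 * B * mu (n+2))%R by (apply Rmult_le_pos; nra).
    nra.
Qed.

Section Picard.

Variables (w : C) (s : Z -> C * C) (Sb : R) (c : C).
Hypothesis hw : (Cmod w <= 1)%R.
Hypothesis hSb : (0 <= Sb)%R.
Hypothesis hs : forall n, (vnorm (s n) <= Sb * nu n)%R.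

Fixpoint picard (k : nat) (n : Z) : C * C :=
  match k with
  | O => (RtoC 0, c)
  | S k' => vadd (Mmul w n (picard k' (n+1)%Z)) (s n)
  end.

Let K1 : R := 2 * C0 * Cmod c + Sb.
Let Kp : R := growth * K1.

Lemma Kp_ge_0 : (0 <= Kp)%R.
Proof. unfold Kp, K1. pose proof growth_ge_1. pose proof (Cmod_ge_0 c). apply Rmult_le_pos; nra. Qed.

Lemma picard_first_step (n : Z) : (vnorm (vsub (picard 1 n) (picard 0 n)) <= K1 * nu n)%R.
Proof.
  simpl. replace (vsub (vadd (Mmul w n (RtoC 0, c)) (s n)) (RtoC 0, c))
    with (vadd (vsub (Mmul w n (RtoC 0, c)) (RtoC 0, c)) (s n))
    by (unfold vadd, vsub; apply injective_projections; simpl; ring).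
  eapply Rle_trans; [apply vnorm_add|].
  pose proof (Mmul_snd_axis_sub_bound w n c hw). pose proof (hs n).
  pose proof (mu_le_nu n). pose proof (mu_pos n). pose proof (Cmod_ge_0 c).
  assert (2 * C0 * mu n * Cmod c <= 2 * C0 * nu n * Cmod c)%R
    by (apply Rmult_le_compat_r; [|apply Rmult_le_compat_l]; lra).
  unfold K1. nra.
Qed.

Lemma picard_step_decay (k : nat) (n : Z) : (vnorm (vsub (picard (S k) n) (picard k n)) <=
  exp (kappa * (Psi n - Psi (n + Z.of_nat k))) * (K1 * nu (n + Z.of_nat k)))%R.
Proof.
  revert n. induction k as [|k IH]; intros n.
  - rewrite Z.add_0_r, Rminus_diag, Rmult_0_r, exp_0, Rmult_1_l. apply picard_first_step.
  - change (vnorm (vsub (vadd (Mmul w n (picard (S k) (n+1)%Z)) (s n))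
                        (vadd (Mmul w n (picard k (n+1)%Z)) (s n))) <=
            exp (kappa * (Psi n - Psi (n + Z.of_nat (S k)))) * (K1 * nu (n + Z.of_nat (S k))))%R.
    rewrite vsub_vadd, Mmul_vsub.
    eapply Rle_trans; [apply Mmul_bound; auto|].
    specialize (IH (n+1)%Z). replace (n + 1 + Z.of_nat k)%Z with (n + Z.of_nat (S k))%Z in IH by lia.
    pose proof (mu_pos n). pose proof kappa_ge_0.
    replace (exp (kappa * (Psi n - Psi (n + Z.of_nat (S k)))))
      with (exp (kappa * mu n) * exp (kappa * (Psi (n + 1) - Psi (n + Z.of_nat (S k)))))%R
      by (rewrite <- exp_plus; f_equal; unfold mu; ring).
    rewrite Rmult_assoc. apply Rmult_le_compat; [nra|apply vnorm_ge_0|apply exp_ineq1_le|exact IH].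
Qed.

Lemma picard_step_bound (k : nat) (n : Z) :
  (vnorm (vsub (picard (S k) n) (picard k n)) <= Kp * nu (n + Z.of_nat k))%R.
Proof.
  eapply Rle_trans; [apply picard_step_decay|]. unfold Kp. rewrite Rmult_assoc.
  apply Rmult_le_compat_r.
  - pose proof (nu_ge_0 (n + Z.of_nat k)). pose proof (Cmod_ge_0 c). unfold K1.
    apply Rmult_le_pos; nra.
  - apply exp_le_mono. pose proof kappa_ge_0. pose proof (Psi_bounds n).
    pose proof (Psi_bounds (n + Z.of_nat k)). pose proof (Psi_antitone n (n + Z.of_nat k) ltac:(lia)). nra.
Qed.

Lemma picard_cauchy (i j : nat) (n : Z) : (vnorm (vsub (picard (j + i) n) (picard j n)) <=
  Kp * (Phi (n + Z.of_nat j) - Phi (n + Z.of_nat (j + i))))%R.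
Proof.
  induction i as [|i IH].
  - rewrite Nat.add_0_r, !Rminus_diag, Rmult_0_r. unfold vsub, vnorm; simpl.
    replace (fst (picard j n) - fst (picard j n)) with (RtoC 0) by ring.
    replace (snd (picard j n) - snd (picard j n)) with (RtoC 0) by ring.
    rewrite Cmod_0, Rmax_left; lra.
  - eapply Rle_trans; [apply (vnorm_sub_triangle _ (picard (j + i) n))|].
    rewrite <- plus_n_Sm. pose proof (picard_step_bound (j + i) n).
    replace (nu (n + Z.of_nat (j + i)))
      with (Phi (n + Z.of_nat (j + i)) - Phi (n + Z.of_nat (S (j + i))))%R in H
      by (unfold nu; f_equal; f_equal; lia).
    lra.
Qed.

Lemma picard_limit_exists :
  exists f, forall n j, (vnorm (vsub (picard j n) (f n)) <= Kp * Phi (n + Z.of_nat j))%R.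
Proof.
  apply (functional_choice (fun n l => forall j, (vnorm (vsub (picard j n) l) <= Kp * Phi (n + Z.of_nat j))%R)).
  intros n.
  assert (Hr : forall j J, (j <= J)%nat -> (vnorm (vsub (picard J n) (picard j n)) <=
                Kp * (Phi (n + Z.of_nat j) - Phi (n + Z.of_nat J)))%R).
  { intros j J hj. replace J with (j + (J - j))%nat by lia. apply picard_cauchy. }
  assert (Hl : forall e, (0 < e)%R -> exists N, forall j, (N <= j)%nat -> (Phi (n + Z.of_nat j) < e)%R).
  { intros e he. destruct (Phi_lim_pinf e he) as [N HN]. exists (Z.to_nat (N - n)). intros j hj. apply HN. lia. }
  destruct (cauchy_rate_limit (fun j => fst (picard j n)) Kp (fun j => Phi (n + Z.of_nat j)) Kp_ge_0)
    as [l1 Hl1]; [intros; apply Phi_bounds| |auto|].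
  { intros j J hj. eapply Rle_trans; [|apply (Hr j J hj)]. apply (vnorm_fst (vsub _ _)). }
  destruct (cauchy_rate_limit (fun j => snd (picard j n)) Kp (fun j => Phi (n + Z.of_nat j)) Kp_ge_0)
    as [l2 Hl2]; [intros; apply Phi_bounds| |auto|].
  { intros j J hj. eapply Rle_trans; [|apply (Hr j J hj)]. apply (vnorm_snd (vsub _ _)). }
  exists (l1, l2). intros j. apply vnorm_le; simpl; auto.
Qed.

Section PicardLimit.

Variable f : Z -> C * C.
Hypothesis Hf : forall n j, (vnorm (vsub (picard j n) (f n)) <= Kp * Phi (n + Z.of_nat j))%R.

(** [f n] and [M_n(w) f (n+1) + s n] are the limits of [picard (S j) n]. *)
Lemma picard_limit_solves : sys_sol w s f.
Proof.
  intros n. apply vnorm_sub_le_0.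
  apply (le_0_of_le_mul_Phi _ (Kp * (2 + kappa * mu n)) n).
  { pose proof Kp_ge_0. pose proof kappa_ge_0. pose proof (mu_pos n). apply Rmult_le_pos; nra. }
  intros j. pose proof Kp_ge_0. pose proof kappa_ge_0. pose proof (mu_pos n).
  assert (A1 : (vnorm (vsub (f n) (picard (S j) n)) <= Kp * Phi (n + Z.of_nat j))%R).
  { rewrite vnorm_sub_comm. eapply Rle_trans; [apply Hf|].
    apply Rmult_le_compat_l; [lra|apply Phi_antitone; lia]. }
  assert (A2 : (vnorm (vsub (picard (S j) n) (vadd (Mmul w n (f (n + 1)%Z)) (s n))) <=
                (1 + kappa * mu n) * (Kp * Phi (n + Z.of_nat j)))%R).
  { change (picard (S j) n) with (vadd (Mmul w n (picard j (n+1)%Z)) (s n)).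
    rewrite vsub_vadd, Mmul_vsub. eapply Rle_trans; [apply Mmul_bound; auto|].
    apply Rmult_le_compat_l; [nra|]. eapply Rle_trans; [apply Hf|].
    apply Rmult_le_compat_l; [lra|apply Phi_antitone; lia]. }
  eapply Rle_trans; [apply (vnorm_sub_triangle _ (picard (S j) n))|].
  pose proof (Phi_bounds (n + Z.of_nat j)). nra.
Qed.

Lemma picard_limit_cv : cv_pinf2 f (RtoC 0, c).
Proof.
  assert (HB : forall n, (vnorm (vsub (f n) (RtoC 0, c)) <= Kp * Phi n)%R).
  { intros n. rewrite vnorm_sub_comm. pose proof (Hf n 0%nat). rewrite Z.add_0_r in H. auto. }
  split; apply (cv_pinf_of_le_mul_Phi _ _ Kp Kp_ge_0); intros n;
    (eapply Rle_trans; [|apply (HB n)]); [apply (vnorm_fst (vsub _ _))|apply (vnorm_snd (vsub _ _))].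
Qed.

End PicardLimit.

End Picard.

Lemma sys_sol_exists (w : C) (s : Z -> C * C) (Sb : R) (c : C) : (Cmod w <= 1)%R -> (0 <= Sb)%R ->
  (forall n, vnorm (s n) <= Sb * nu n)%R -> exists f, sys_sol w s f /\ cv_pinf2 f (RtoC 0, c).
Proof.
  intros hw hSb hs. destruct (picard_limit_exists w s Sb c hw hSb hs) as [f Hf].
  exists f. split; [eapply picard_limit_solves|eapply picard_limit_cv]; eauto.
Qed.

Lemma leading_solution : exists v0 B0,
  sys_sol 0 no_source v0 /\ cv_pinf2 v0 (RtoC 0, RtoC 1) /\ (0 <= B0)%R /\
  (forall n, vnorm (v0 n) <= B0)%R /\ forall m, (Cmod (fst (v0 m)) <= 2 * C0 * B0 * mu m)%R.
Proof.
  assert (hw0 : (Cmod 0 <= 1)%R) by (rewrite Cmod_0; lra).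
  destruct (sys_sol_exists 0 no_source 0 1 hw0 (Rle_refl 0) no_source_bound) as [v0 [Hv0 Cv0]].
  pose proof (sys_sol_bounded 0 no_source 0 v0 _ hw0 (Rle_refl 0) no_source_bound Hv0 Cv0) as Hb0.
  exists v0, (growth * (vnorm (RtoC 0, RtoC 1) + 9 * 0))%R.
  refine (conj Hv0 (conj Cv0 (conj _ (conj Hb0 _)))).
  - pose proof growth_ge_1. pose proof (vnorm_ge_0 (RtoC 0, RtoC 1)). nra.
  - intros m. eapply Rle_trans; [apply (sys_sol0_fst_bound no_source v0 _ m Hv0 Hb0)|].
    unfold no_source; simpl. rewrite Cmod_0. lra.
Qed.

Lemma first_order_solution (v0 : Z -> C * C) (B0 S1 : R) : (0 <= B0)%R -> (0 <= S1)%R ->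
  (forall n, vnorm (v0 n) <= B0)%R -> (forall m, Cmod (fst (v0 m)) <= 2 * C0 * B0 * mu m)%R ->
  (forall n, vnorm (Bsource v0 n) <= S1 * nu n)%R ->
  exists v1 B1 G1, sys_sol 0 (Bsource v0) v1 /\ cv_pinf2 v1 (RtoC 0, RtoC 0) /\
    (0 <= B1)%R /\ (forall n, vnorm (v1 n) <= B1)%R /\ (0 <= G1)%R /\
    forall m, (Cmod (fst (v1 m)) <= G1 * (mu m + mu (m+1)))%R.
Proof.
  intros hB0 hS1 Hb0 F0 Hs1.
  assert (hw0 : (Cmod 0 <= 1)%R) by (rewrite Cmod_0; lra).
  destruct (sys_sol_exists 0 (Bsource v0) S1 0 hw0 hS1 Hs1) as [v1 [Hv1 Cv1]].
  set (B1 := (growth * (vnorm (RtoC 0, RtoC 0) + 9 * S1))%R).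
  assert (Hb1 : forall n, (vnorm (v1 n) <= B1)%R) by (apply (sys_sol_bounded 0 (Bsource v0) S1); auto).
  assert (hB1 : (0 <= B1)%R) by (pose proof (Hb1 0%Z); pose proof (vnorm_ge_0 (v1 0%Z)); lra).
  clearbody B1.
  set (G1 := (2 * C0 * B1 + (1 + 3 * C0) * (2 * C0 * B0) + C0 * B0)%R).
  exists v1, B1, G1. refine (conj Hv1 (conj Cv1 (conj hB1 (conj Hb1 (conj _ _))))).
  - unfold G1. assert (0 <= C0 * B0)%R by nra. assert (0 <= C0 * B1)%R by nra. nra.
  - intros m. eapply Rle_trans; [apply (sys_sol0_fst_bound _ v1 B1 m Hv1 Hb1)|].
    unfold Bsource. eapply Rle_trans; [apply Rplus_le_compat_l, Bmul_fst_bound|].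
    pose proof (F0 (m+1)%Z). pose proof (Hb0 (m+1)%Z). pose proof (mu_pos m). pose proof (mu_pos (m+1)).
    assert ((1 + 3 * C0) * Cmod (fst (v0 (m + 1)%Z)) <= (1 + 3 * C0) * (2 * C0 * B0 * mu (m + 1)))%R
      by (apply Rmult_le_compat_l; lra).
    assert (C0 * mu m * vnorm (v0 (m + 1)%Z) <= C0 * mu m * B0)%R by (apply Rmult_le_compat_l; nra).
    assert (0 <= (1 + 3 * C0) * (2 * C0 * B0) * mu m)%R by (repeat apply Rmult_le_pos; lra).
    assert (0 <= C0 * B1 * mu (m+1))%R by (repeat apply Rmult_le_pos; lra).
    assert (0 <= C0 * B0 * mu (m+1))%R by (repeat apply Rmult_le_pos; lra).
    unfold G1. nra.
Qed.

Lemma remainder_sol (w : C) (v0 v1 G : Z -> C * C) : w <> 0 ->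
  sys_sol 0 no_source v0 -> sys_sol 0 (Bsource v0) v1 -> sys_sol w no_source G ->
  sys_sol w (Bsource v1) (fun n => ((fst (G n) - fst (v0 n) - w * fst (v1 n)) * / (w * w),
                                   (snd (G n) - snd (v0 n) - w * snd (v1 n)) * / (w * w))).
Proof.
  intros hw Hv0 Hv1 HG n. rewrite (HG n), (Hv0 n), (Hv1 n).
  unfold Bsource, vadd, Mmul, Bmul, no_source; simpl.
  apply injective_projections; simpl; field; auto.
Qed.

Lemma second_order_bound (v0 v1 : Z -> C * C) (S2 : R) (w : C) (G : Z -> C * C) :
  sys_sol 0 no_source v0 -> cv_pinf2 v0 (RtoC 0, RtoC 1) ->
  sys_sol 0 (Bsource v0) v1 -> cv_pinf2 v1 (RtoC 0, RtoC 0) ->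
  (0 <= S2)%R -> (forall n, vnorm (Bsource v1 n) <= S2 * nu n)%R ->
  w <> 0 -> (Cmod w <= 1)%R -> sys_sol w no_source G -> cv_pinf2 G (RtoC 0, RtoC 1) ->
  forall n, (Cmod (snd (G n) - snd (v0 n) - w * snd (v1 n)) <=
             growth * (vnorm (RtoC 0, RtoC 0) + 9 * S2) * (Cmod w * Cmod w))%R.
Proof.
  intros Hv0 [c01 c02] Hv1 [c11 c12] hS2 Hs2 wnz hw HG [g1 g2] n.
  assert (CR : cv_pinf2 (fun n => ((fst (G n) - fst (v0 n) - w * fst (v1 n)) * / (w * w),
                                  (snd (G n) - snd (v0 n) - w * snd (v1 n)) * / (w * w)))
                        (RtoC 0, RtoC 0)).
  { simpl in *. split; simpl.
    - replace (RtoC 0) with ((0 - 0 - w * 0) * / (w * w)) at 1 by ring. apply cv_pinf_comb3; auto.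
    - replace (RtoC 0) with ((1 - 1 - w * 0) * / (w * w)) at 1 by ring. apply cv_pinf_comb3; auto. }
  pose proof (sys_sol_bounded w _ S2 _ _ hw hS2 Hs2 (remainder_sol w v0 v1 G wnz Hv0 Hv1 HG) CR n) as HR.
  pose proof (Rle_trans _ _ _ (vnorm_snd _) HR) as HR2. simpl in HR2.
  replace (snd (G n) - snd (v0 n) - w * snd (v1 n))
    with ((snd (G n) - snd (v0 n) - w * snd (v1 n)) * / (w * w) * (w * w)) by (field; auto).
  rewrite Cmod_mult, (Cmod_mult w w).
  apply Rmult_le_compat_r; [pose proof (Cmod_ge_0 w); nra|exact HR2].
Qed.

Definition sys_limit (w L : C) : Prop := exists G,
  sys_sol w no_source G /\ cv_pinf2 G (RtoC 0, RtoC 1) /\ cv_minf (fun n => snd (G n)) L.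

Theorem sys_expansion : exists v0 v1 L0 L1 Kf,
  sys_sol 0 no_source v0 /\ cv_pinf2 v0 (RtoC 0, RtoC 1) /\
  sys_sol 0 (Bsource v0) v1 /\ cv_pinf2 v1 (RtoC 0, RtoC 0) /\
  cv_minf (fun n => snd (v0 n)) L0 /\ cv_minf (fun n => snd (v1 n)) L1 /\ (0 <= Kf)%R /\
  forall w : C, w <> 0 -> (Cmod w <= 1)%R ->
    (exists L, sys_limit w L) /\
    forall L, sys_limit w L -> (Cmod (L - L0 - w * L1) <= Kf * (Cmod w * Cmod w))%R.
Proof.
  assert (hw0 : (Cmod 0 <= 1)%R) by (rewrite Cmod_0; lra).
  destruct leading_solution as [v0 [B0 [Hv0 [Cv0 [hB0 [Hb0 F0]]]]]].
  assert (hG0 : (0 <= 2 * C0 * B0)%R) by nra.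
  assert (Hs1 := Bsource_bound v0 _ _ hG0 hB0).
  lapply Hs1; [clear Hs1; intros Hs1 | intros m; pose proof (F0 m); pose proof (mu_pos (m+1)); nra].
  lapply Hs1; [clear Hs1; intros Hs1|auto].
  set (S1 := ((1 + 3 * C0) * (2 * C0 * B0) + 2 * C0 * B0)%R) in Hs1.
  assert (hS1 : (0 <= S1)%R) by (unfold S1; nra).
  destruct (first_order_solution v0 B0 S1 hB0 hS1 Hb0 F0 Hs1)
    as [v1 [B1 [G1 [Hv1 [Cv1 [hB1 [Hb1 [hG1 F1]]]]]]]].
  pose proof (Bsource_bound v1 G1 B1 hG1 hB1 F1 Hb1) as Hs2.
  set (S2 := ((1 + 3 * C0) * G1 + 2 * C0 * B1)%R) in Hs2.
  assert (hS2 : (0 <= S2)%R) by (unfold S2; nra).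
  destruct (sys_sol_snd_cv_minf 0 no_source 0 B0 v0 hw0 (Rle_refl 0) hB0 no_source_bound Hv0 Hb0) as [L0 HL0].
  destruct (sys_sol_snd_cv_minf 0 (Bsource v0) S1 B1 v1 hw0 hS1 hB1 Hs1 Hv1 Hb1) as [L1 HL1].
  set (Kf := (growth * (vnorm (RtoC 0, RtoC 0) + 9 * S2))%R).
  assert (hKf : (0 <= Kf)%R) by (unfold Kf; pose proof growth_ge_1; pose proof (vnorm_ge_0 (RtoC 0, RtoC 0)); nra).
  exists v0, v1, L0, L1, Kf.
  refine (conj Hv0 (conj Cv0 (conj Hv1 (conj Cv1 (conj HL0 (conj HL1 (conj hKf _))))))).
  intros w wnz hw. split.
  - destruct (sys_sol_exists w no_source 0 1 hw (Rle_refl 0) no_source_bound) as [G [HG CG]].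
    pose proof (sys_sol_bounded w no_source 0 G _ hw (Rle_refl 0) no_source_bound HG CG) as HbG.
    assert (hBG : (0 <= growth * (vnorm (RtoC 0, RtoC 1) + 9 * 0))%R)
      by (pose proof (HbG 0%Z); pose proof (vnorm_ge_0 (G 0%Z)); lra).
    destruct (sys_sol_snd_cv_minf w no_source 0 _ G hw (Rle_refl 0) hBG no_source_bound HG HbG) as [L HL].
    exists L, G. auto.
  - intros L [G [HG [CG HL]]].
    apply (cv_minf_le (fun n => snd (G n) - snd (v0 n) - w * snd (v1 n))); [apply cv_minf_comb3; auto|].
    apply (second_order_bound v0 v1 S2 w G); auto.
Qed.

End PerturbedSystem.

(** * Infinite products and telescoping sums *)

Lemma prodZ_telescope (p P : Z -> C) : (forall n, P n = p n * P (n+1)%Z) ->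
  forall len a, prodZ p a len * P (a + Z.of_nat len)%Z = P a.
Proof.
  intros H len. induction len as [|l IH]; intros a.
  - simpl. rewrite Z.add_0_r. ring.
  - simpl prodZ. rewrite Nat2Z.inj_succ, Z.add_succ_r, <- Z.add_1_l, Z.add_assoc, (Z.add_comm a 1).
    rewrite <- Cmult_assoc, IH, Z.add_comm. auto.
Qed.

Lemma sumZ_telescope (g : Z -> C) (len : nat) (a : Z) :
  sumZ (fun k => g k - g (k+1)%Z) a len = g a - g (a + Z.of_nat len)%Z.
Proof.
  revert a. induction len as [|l IH]; intros a.
  - simpl. rewrite Z.add_0_r. ring.
  - simpl sumZ. rewrite IH, Nat2Z.inj_succ.
    replace (a + Z.succ (Z.of_nat l))%Z with (a + 1 + Z.of_nat l)%Z by lia. ring.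
Qed.

Lemma sumZ_ext (f g : Z -> C) : (forall k, f k = g k) -> forall len a, sumZ f a len = sumZ g a len.
Proof. intros H len; induction len as [|l IH]; intros a; simpl; rewrite ?IH, ?H; auto. Qed.

Lemma sumZ_is_ext (f g : Z -> C) (s : C) : (forall k, f k = g k) -> sumZ_is g s -> sumZ_is f s.
Proof.
  intros H Hg. eapply cv_nat_ext; [|apply Hg]. intros N. unfold psumZ. symmetry. apply sumZ_ext, H.
Qed.

Lemma sumZ_is_telescope (g : Z -> C) (a b : C) :
  cv_minf g a -> cv_pinf g b -> sumZ_is (fun k => g k - g (k+1)%Z) (a - b).
Proof.
  intros Ha Hb. eapply cv_nat_ext; [|apply cv_nat_sub; [apply cv_minf_iff_nat, Ha|apply cv_pinf_nat_succ, Hb]].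
  intros N. unfold psumZ. rewrite sumZ_telescope.
  replace (- Z.of_nat N + Z.of_nat (2 * N + 1))%Z with (Z.of_nat N + 1)%Z by lia. reflexivity.
Qed.

Lemma Cmod_inv_le_exp (x : C) (e : R) : (Cmod (x - 1) <= e)%R -> (e <= 1/2)%R ->
  (Cmod (/ x) <= exp (2 * e))%R.
Proof.
  intros h he. pose proof (Cmod_ge_0 (x - 1)).
  assert (hx : (1 - e <= Cmod x)%R) by (pose proof (Cmod_le_sub_add 1 x); rewrite Cmod_1, Cmod_sub_comm in H0; lra).
  assert (x <> 0) by (intros E; rewrite E, Cmod_0 in hx; lra).
  rewrite Cmod_inv by auto. eapply Rle_trans; [|apply exp_ineq1_le].
  apply (Rmult_le_reg_r (Cmod x)); [lra|]. rewrite Rinv_l by lra. nra.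
Qed.

Section ScalarRecursion.

Variables p P : Z -> C.
Variable Cp : R.
Hypothesis hCp : (0 <= Cp)%R.
Hypothesis HP : forall n, P n = p n * P (n+1)%Z.
Hypothesis hp : forall n, p n <> 0.
Hypothesis hp1 : forall n, (Cmod (p n - 1) <= Cp * mu n)%R.
Hypothesis HP1 : cv_pinf P 1.

Lemma scalar_sol_neq_0 (n : Z) : P n <> 0.
Proof.
  intros E.
  assert (A : forall k : nat, P (n + Z.of_nat k)%Z = 0).
  { induction k as [|k IH]; [rewrite Z.add_0_r; auto|].
    rewrite Nat2Z.inj_succ, Z.add_succ_r, <- Z.add_1_r.
    set (m := (n + Z.of_nat k)%Z) in *.
    replace (P (m + 1)%Z) with (/ p m * P m) by (rewrite (HP m); field; auto).
    rewrite IH. ring. }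
  destruct (HP1 (1/2)%R ltac:(lra)) as [N HN]. specialize (HN (Z.max N n) ltac:(lia)).
  replace (Z.max N n) with (n + Z.of_nat (Z.to_nat (Z.max N n - n)))%Z in HN by lia.
  rewrite A in HN. replace (0 - 1) with (- (1)) in HN by ring. rewrite Cmod_opp, Cmod_1 in HN. lra.
Qed.

(** Running the recursion forwards, [|P|] grows by at most [exp (2 Cp mu m)] per step where
    [Cp mu m <= 1/2], i.e. far enough to the left; so [P] cannot tend to [0] at [-oo]. *)
Lemma scalar_sol_lim_neq_0 (L : C) : cv_minf P L -> L <> 0.
Proof.
  intros Hm EL. subst L.
  destruct (Psi_lim_minf (/ (2 * Cp + 2))%R ltac:(apply Rinv_0_lt_compat; lra)) as [N HN].
  assert (hmu : forall k, (k + 1 <= N)%Z -> (Cp * mu k <= 1/2)%R).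
  { intros k hk. specialize (HN (k+1)%Z hk). pose proof (Psi_bounds k). unfold mu.
    apply Rle_trans with (Cp * / (2 * Cp + 2))%R; [apply Rmult_le_compat_l; lra|].
    apply (Rmult_le_reg_r (2 * Cp + 2)); [lra|]. rewrite Rmult_assoc, Rinv_l by lra. lra. }
  set (M := (N - 1)%Z).
  assert (Fw : forall n (k : nat), (n + Z.of_nat k <= M)%Z ->
             (Cmod (P (n + Z.of_nat k)%Z) <= exp (2 * Cp * (Psi n - Psi (n + Z.of_nat k))) * Cmod (P n))%R).
  { intros n k. induction k as [|k IH]; intros hk.
    - rewrite Z.add_0_r, Rminus_diag, Rmult_0_r, exp_0. lra.
    - rewrite Nat2Z.inj_succ, Z.add_succ_r, <- Z.add_1_r in *. set (m := (n + Z.of_nat k)%Z) in *.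
      replace (P (m + 1)%Z) with (/ p m * P m) by (rewrite (HP m); field; auto).
      rewrite Cmod_mult.
      pose proof (Cmod_inv_le_exp (p m) (Cp * mu m) (hp1 m) (hmu m ltac:(unfold M in hk; lia))).
      specialize (IH ltac:(lia)).
      replace (2 * Cp * (Psi n - Psi (m + 1)))%R with (2 * (Cp * mu m) + 2 * Cp * (Psi n - Psi m))%R
        by (unfold mu; ring).
      rewrite exp_plus, Rmult_assoc. apply Rmult_le_compat; auto using Cmod_ge_0. }
  apply (scalar_sol_neq_0 M). apply Cmod_eq_0, Rle_antisym; [|apply Cmod_ge_0].
  apply Rle_plus_epsilon. intros e he. rewrite Rplus_0_l. pose proof (exp_pos (6 * Cp)).
  destruct (Hm (e / exp (6 * Cp))%R ltac:(apply Rdiv_lt_0_compat; lra)) as [N2 HN2].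
  set (n := Z.min M N2).
  pose proof (Fw n (Z.to_nat (M - n)) ltac:(unfold n; lia)) as F1.
  replace (n + Z.of_nat (Z.to_nat (M - n)))%Z with M in F1 by (unfold n; lia).
  specialize (HN2 n ltac:(unfold n; lia)). replace (P n - 0) with (P n) in HN2 by ring.
  assert (exp (2 * Cp * (Psi n - Psi M)) <= exp (6 * Cp))%R.
  { apply exp_le_mono. pose proof (Psi_bounds n). pose proof (Psi_bounds M).
    pose proof (Psi_antitone n M ltac:(unfold n; lia)). nra. }
  pose proof (Cmod_ge_0 (P n)).
  eapply Rle_trans; [apply F1|].
  apply Rle_trans with (exp (6 * Cp) * Cmod (P n))%R; [apply Rmult_le_compat_r; auto|].
  apply (Rmult_lt_compat_l (exp (6 * Cp))) in HN2; auto.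
  replace (exp (6 * Cp) * (e / exp (6 * Cp)))%R with e in HN2 by (field; lra). lra.
Qed.

Lemma prodZ_is_scalar_sol (L : C) : cv_minf P L -> prodZ_is p L.
Proof.
  intros Hm. unfold prodZ_is.
  assert (E : forall N : nat, pprodZ p N = P (- Z.of_nat N)%Z / P (Z.of_nat N + 1)%Z).
  { intros N. unfold pprodZ. pose proof (prodZ_telescope p P HP (2 * N + 1) (- Z.of_nat N)%Z) as H.
    replace (- Z.of_nat N + Z.of_nat (2 * N + 1))%Z with (Z.of_nat N + 1)%Z in H by lia.
    rewrite <- H. field. apply scalar_sol_neq_0. }
  replace L with (L / 1) by (field; apply RtoC_1_neq_0).
  eapply cv_nat_ext; [intros; symmetry; apply E|].
  apply cv_nat_div; [apply RtoC_1_neq_0|apply cv_minf_iff_nat, Hm|apply cv_pinf_nat_succ, HP1].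
Qed.

End ScalarRecursion.

Lemma finite_max (f : Z -> R) (N : nat) : exists M, forall n, (Z.abs n < Z.of_nat N)%Z -> (f n <= M)%R.
Proof.
  induction N as [|N [M HM]].
  - exists 0%R. intros n h. lia.
  - exists (Rmax M (Rmax (f (Z.of_nat N)) (f (- Z.of_nat N)%Z))). intros n h.
    destruct (Z_lt_le_dec (Z.abs n) (Z.of_nat N)) as [h'|h'].
    + eapply Rle_trans; [apply HM; auto|apply Rmax_l].
    + eapply Rle_trans; [|apply Rmax_r].
      assert (n = Z.of_nat N \/ n = - Z.of_nat N)%Z as [E|E] by lia; subst n; [apply Rmax_l|apply Rmax_r].
Qed.

Lemma rapidly_decreasing_le_mu (u : Z -> C) : rapidly_decreasing u ->
  exists Cu, (0 <= Cu)%R /\ forall n, (Cmod (u n) <= Cu * mu n)%R.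
Proof.
  intros hu. destruct (hu 2%nat 1%R ltac:(lra)) as [N HN].
  set (N' := Z.to_nat (Z.max N 1)).
  destruct (finite_max (fun n => Cmod (u n) / mu n)%R N') as [Cf HCf].
  exists (Rmax 8 Cf). split; [eapply Rle_trans; [|apply Rmax_l]; lra|].
  intros n. pose proof (mu_pos n).
  destruct (Z_lt_le_dec (Z.abs n) (Z.of_nat N')) as [h|h].
  - specialize (HCf n h). simpl in HCf.
    apply Rle_trans with (Cf * mu n)%R; [|apply Rmult_le_compat_r; [lra|apply Rmax_r]].
    apply (Rmult_le_compat_r (mu n)) in HCf; [|lra]. unfold Rdiv in HCf.
    rewrite Rmult_assoc, Rinv_l, Rmult_1_r in HCf by lra. auto.
  - assert (hN : (N <= Z.abs n)%Z) by (unfold N' in h; lia).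
    assert (h1 : (1 <= IZR (Z.abs n))%R) by (apply IZR_le; unfold N' in h; lia).
    specialize (HN n hN). simpl in HN. pose proof (mu_ge_inv_sq n).
    set (x := IZR (Z.abs n)) in *.
    apply Rle_trans with (8 * mu n)%R; [|apply Rmult_le_compat_r; [lra|apply Rmax_l]].
    assert (Cmod (u n) < / (x * x))%R.
    { apply (Rmult_lt_reg_l (x * x)); [nra|]. rewrite Rinv_r by nra. lra. }
    assert (/ (x * x) <= 8 * / (2 * (x + 1) ^ 2))%R.
    { rewrite <- (Rinv_inv 8), <- Rinv_mult. apply Rinv_le_contravar; [nra|]. simpl. nra. }
    lra.
Qed.

Lemma rapidly_decreasing_coef_bounds (q r : Z -> C) :
  rapidly_decreasing q -> rapidly_decreasing r ->
  exists C0, (0 <= C0)%R /\ (forall n, Cmod (q n) <= C0 * mu n)%R /\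
    (forall n, Cmod (r n) <= C0 * mu n)%R /\ (forall n m, Cmod (q n * r m) <= C0 * mu n)%R.
Proof.
  intros hq hr.
  destruct (rapidly_decreasing_le_mu q hq) as [Cq [hCq Hq]].
  destruct (rapidly_decreasing_le_mu r hr) as [Cr [hCr Hr]].
  exists (Cq + Cr + 3 * Cq * Cr)%R.
  assert (0 <= Cq * Cr)%R by nra.
  split; [nra|split; [|split]].
  - intros n. pose proof (Hq n). pose proof (mu_pos n). nra.
  - intros n. pose proof (Hr n). pose proof (mu_pos n). nra.
  - intros n m. rewrite Cmod_mult.
    pose proof (Hq n). pose proof (Hr m). pose proof (mu_le_3 m). pose proof (mu_pos m). pose proof (mu_pos n).
    pose proof (Cmod_ge_0 (q n)). pose proof (Cmod_ge_0 (r m)).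
    assert (Cmod (r m) <= 3 * Cr)%R by nra.
    apply Rle_trans with (Cq * mu n * (3 * Cr))%R; [apply Rmult_le_compat; auto|nra].
Qed.

Lemma zpow_of_nat (z : C) (k : nat) : zpow z (Z.of_nat k) = Cpow z k.
Proof. destruct k; simpl; auto. rewrite SuccNat2Pos.id_succ. auto. Qed.

Lemma zpow_opp_of_nat (z : C) (k : nat) : zpow z (- Z.of_nat k) = / Cpow z k.
Proof. destruct k; simpl. { field. } rewrite SuccNat2Pos.id_succ. auto. Qed.

Lemma Z_cases_of_nat (n : Z) : exists k : nat, n = Z.of_nat k \/ n = (- Z.of_nat k)%Z.
Proof. exists (Z.to_nat (Z.abs n)). lia. Qed.

Lemma zpow_neq_0 (z : C) (n : Z) : z <> 0 -> zpow z n <> 0.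
Proof.
  intros hz. destruct (Z_cases_of_nat n) as [k [->| ->]].
  - rewrite zpow_of_nat. apply Cpow_nz, hz.
  - rewrite zpow_opp_of_nat. apply Cinv_neq_0, Cpow_nz, hz.
Qed.

Lemma zpow_succ (z : C) (n : Z) : z <> 0 -> zpow z (n + 1) = z * zpow z n.
Proof.
  intros hz. destruct (Z_cases_of_nat n) as [k [->| ->]].
  - replace (Z.of_nat k + 1)%Z with (Z.of_nat (S k)) by lia. rewrite !zpow_of_nat. reflexivity.
  - destruct k as [|k].
    + simpl. ring.
    + replace (- Z.of_nat (S k) + 1)%Z with (- Z.of_nat k)%Z by lia. rewrite !zpow_opp_of_nat. simpl.
      field. split; auto. apply Cpow_nz, hz.
Qed.

Lemma zpow_opp (z : C) (n : Z) : z <> 0 -> zpow z (- n) = / zpow z n.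
Proof.
  intros hz. destruct (Z_cases_of_nat n) as [k [->| ->]].
  - rewrite zpow_opp_of_nat, zpow_of_nat. reflexivity.
  - rewrite Z.opp_involutive, zpow_opp_of_nat, zpow_of_nat. field. apply Cpow_nz, hz.
Qed.

(** * Transmission coefficients *)

Lemma Cinv_inv (x : C) : x <> 0 -> / / x = x.
Proof. intros hx. field. auto. Qed.

Lemma inverse_expansion (L0 L1 L w : C) (Kf : R) :
  L0 <> 0 -> (0 <= Kf)%R -> (Cmod w <= 1)%R -> (4 * Cmod w * (Cmod L1 + Kf) <= Cmod L0)%R ->
  (Cmod (L - L0 - w * L1) <= Kf * (Cmod w * Cmod w))%R ->
  L <> 0 /\ (Cmod (/ L - / L0 * (1 - w * (L1 / L0))) <=
             2 * (Kf + Cmod (L1 / L0) * (Cmod L1 + Kf)) / (Cmod L0 * Cmod L0) * (Cmod w * Cmod w))%R.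
Proof.
  intros hL0 hK hw1 hw hL.
  assert (hd : (0 < Cmod L0)%R) by (apply Cmod_gt_0; auto).
  pose proof (Cmod_ge_0 w) as ha. pose proof (Cmod_ge_0 L1). pose proof (Cmod_ge_0 (L1 / L0)).
  set (a := Cmod w) in *. set (d := Cmod L0) in *. set (S := L1 / L0) in *.
  assert (hLL0 : (Cmod (L - L0) <= a * (Cmod L1 + Kf))%R).
  { replace (L - L0) with ((L - L0 - w * L1) + w * L1) by ring.
    eapply Rle_trans; [apply Cmod_triangle|]. rewrite Cmod_mult. fold a.
    assert (Kf * (a * a) <= Kf * a)%R by (apply Rmult_le_compat_l; nra). nra. }
  assert (hLb : (d / 2 <= Cmod L)%R).
  { pose proof (Cmod_le_sub_add L0 L). rewrite Cmod_sub_comm in H1. fold d in H1. nra. }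
  assert (hLnz : L <> 0) by (intros E; rewrite E, Cmod_0 in hLb; lra).
  split; auto.
  replace (/ L - / L0 * (1 - w * S)) with ((- (L - L0 - w * L1) + w * S * (L - L0)) / (L * L0))
    by (unfold S; field; auto).
  rewrite Cmod_div by (apply Cmult_neq_0; auto). rewrite Cmod_mult. fold d.
  set (X := (Kf + Cmod S * (Cmod L1 + Kf))%R).
  assert (hnum : (Cmod (- (L - L0 - w * L1) + w * S * (L - L0)) <= X * (a * a))%R).
  { eapply Rle_trans; [apply Cmod_triangle|]. rewrite Cmod_opp, !Cmod_mult. fold a.
    assert (a * Cmod S * Cmod (L - L0) <= a * Cmod S * (a * (Cmod L1 + Kf)))%R
      by (apply Rmult_le_compat_l; nra).
    unfold X. nra. }
  assert (hX : (0 <= X * (a * a))%R) by (unfold X; apply Rmult_le_pos; nra).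
  apply (Rmult_le_reg_r (Cmod L * d)); [nra|].
  unfold Rdiv. rewrite Rmult_assoc, Rinv_l, Rmult_1_r by nra.
  replace (2 * X * / (d * d) * (a * a) * (Cmod L * d))%R with (X * (a * a) * (2 * Cmod L / d))%R
    by (field; lra).
  assert (1 <= 2 * Cmod L / d)%R.
  { apply (Rmult_le_reg_r d); [lra|]. unfold Rdiv. rewrite Rmult_assoc, Rinv_l by lra. lra. }
  nra.
Qed.

Lemma inverse_limit_expansion (P : C -> C -> Prop) (L0 L1 : C) (Kf : R) : L0 <> 0 -> (0 <= Kf)%R ->
  (forall w : C, w <> 0 -> (Cmod w <= 1)%R ->
    (exists L, P w L) /\ forall L, P w L -> (Cmod (L - L0 - w * L1) <= Kf * (Cmod w * Cmod w))%R) ->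
  exists delta K, (0 < delta <= 1)%R /\ forall w : C, w <> 0 -> (Cmod w < delta)%R ->
    (exists L, P w L /\ L <> 0) /\
    forall L, P w L -> (Cmod (/ L - / L0 * (1 - w * (L1 / L0))) <= K * (Cmod w * Cmod w))%R.
Proof.
  intros hL0 hK HP. pose proof (proj1 (Cmod_gt_0 L0) hL0). pose proof (Cmod_ge_0 L1).
  exists (Rmin 1 (Cmod L0 / (4 * (Cmod L1 + Kf + 1))))%R,
         (2 * (Kf + Cmod (L1 / L0) * (Cmod L1 + Kf)) / (Cmod L0 * Cmod L0))%R.
  split; [split; [apply Rmin_glb_lt; [lra|apply Rdiv_lt_0_compat; lra]|apply Rmin_l]|].
  intros w wnz hw.
  assert (hw1 : (Cmod w <= 1)%R) by (pose proof (Rmin_l 1 (Cmod L0 / (4 * (Cmod L1 + Kf + 1)))); lra).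
  assert (hsmall : (4 * Cmod w * (Cmod L1 + Kf) <= Cmod L0)%R).
  { pose proof (Rmin_r 1 (Cmod L0 / (4 * (Cmod L1 + Kf + 1)))).
    assert (Cmod w * (4 * (Cmod L1 + Kf + 1)) <= Cmod L0)%R.
    { apply (Rmult_le_reg_r (/ (4 * (Cmod L1 + Kf + 1)))); [apply Rinv_0_lt_compat; lra|].
      rewrite Rmult_assoc, Rinv_r, Rmult_1_r by lra. fold (Rdiv (Cmod L0) (4 * (Cmod L1 + Kf + 1))). lra. }
    pose proof (Cmod_ge_0 w). nra. }
  destruct (HP w wnz hw1) as [[L HL] Hb]. split.
  - exists L. split; auto. apply (inverse_expansion L0 L1 L w Kf); auto.
  - intros L' HL'. apply (inverse_expansion L0 L1 L' w Kf); auto.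
Qed.

(** The normalised Jost solutions: [z^(-n) psi_n] for [T], with [w = z^2], and the swapped
    [z^n psibar_n] for [Tbar], with [w = z^(-2)]. *)
Definition T_limit (q r : Z -> C) : C -> C -> Prop :=
  sys_limit (fun _ => 0) (fun n => - q n) (fun _ => 0) (fun n => 1 - q n * r n)
            (fun _ => 1) (fun n => q n) (fun n => r n) (fun n => q n * r n).

Definition Tbar_limit (q r : Z -> C) : C -> C -> Prop :=
  sys_limit (fun n => q n * r n) (fun n => r n) (fun n => q n) (fun _ => 1)
            (fun n => 1 - q n * r n) (fun _ => 0) (fun n => - q n) (fun _ => 0).

Lemma transT_iff (q r : Z -> C) (z t : C) : z <> 0 ->
  transT q r z t <-> t <> 0 /\ T_limit q r (z * z) (/ t).
Proof.
  intros znz. pose proof (zpow_neq_0 z) as hzp. split.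
  - intros [tnz [alpha [beta [[Hs [Ha Hb]] Hm]]]]. split; auto.
    exists (fun n => (zpow z (- n) * alpha n, zpow z (- n) * beta n)). split; [|split; [split|]]; auto.
    intros n. destruct (Hs n) as [Ea Eb]. rewrite Ea, Eb, !zpow_opp, zpow_succ by auto.
    unfold vadd, Mmul, no_source; simpl. pose proof (hzp n znz).
    apply injective_projections; simpl; field; auto.
  - intros [tnz [G [HG [[CG1 CG2] HL]]]]. split; auto.
    exists (fun n => zpow z n * fst (G n)), (fun n => zpow z n * snd (G n)).
    assert (E : forall n (x : C), zpow z (- n) * (zpow z n * x) = x)
      by (intros; rewrite zpow_opp by auto; field; auto).
    split; [split; [|split]|].
    + intros n. rewrite (HG n) at 1 2. rewrite zpow_succ by auto.
      unfold vadd, Mmul, no_source; simpl. pose proof (hzp n znz). split; field; auto.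
    + eapply cv_pinf_ext; [|apply CG1]. intros n. symmetry. apply E.
    + eapply cv_pinf_ext; [|apply CG2]. intros n. symmetry. apply E.
    + eapply cv_minf_ext; [|apply HL]. intros n. symmetry. apply E.
Qed.

Lemma transTbar_iff (q r : Z -> C) (z t : C) : z <> 0 ->
  transTbar q r z t <-> t <> 0 /\ Tbar_limit q r (/ (z * z)) (/ t).
Proof.
  intros znz. pose proof (zpow_neq_0 z) as hzp. split.
  - intros [tnz [alpha [beta [[Hs [Ha Hb]] Hm]]]]. split; auto.
    exists (fun n => (zpow z n * beta n, zpow z n * alpha n)). split; [|split; [split|]]; auto.
    intros n. destruct (Hs n) as [Ea Eb]. rewrite Ea, Eb, zpow_succ by auto.
    unfold vadd, Mmul, no_source; simpl. pose proof (hzp n znz).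
    apply injective_projections; simpl; field; auto.
  - intros [tnz [G [HG [[CG1 CG2] HL]]]]. split; auto.
    exists (fun n => zpow z (- n) * snd (G n)), (fun n => zpow z (- n) * fst (G n)).
    assert (E : forall n (x : C), zpow z n * (zpow z (- n) * x) = x)
      by (intros; rewrite zpow_opp by auto; field; auto).
    split; [split; [|split]|].
    + intros n. rewrite (HG n) at 1 2. replace (- (n + 1))%Z with (- n - 1)%Z by lia.
      replace (zpow z (- n)) with (z * zpow z (- n - 1)) by (rewrite <- zpow_succ by auto; f_equal; lia).
      unfold vadd, Mmul, no_source; simpl. pose proof (hzp (- n - 1)%Z znz). split; field; auto.
    + eapply cv_pinf_ext; [|apply CG2]. intros n. symmetry. apply E.
    + eapply cv_pinf_ext; [|apply CG1]. intros n. symmetry. apply E.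
    + eapply cv_minf_ext; [|apply HL]. intros n. symmetry. apply E.
Qed.

Lemma transT_asymptotics (q r : Z -> C) (L0 L1 : C) (Kf : R) : L0 <> 0 -> (0 <= Kf)%R ->
  (forall w : C, w <> 0 -> (Cmod w <= 1)%R -> (exists L, T_limit q r w L) /\
    forall L, T_limit q r w L -> (Cmod (L - L0 - w * L1) <= Kf * (Cmod w * Cmod w))%R) ->
  exists (delta K : R), (0 < delta)%R /\
    forall z : C, (0 < Cmod z)%R -> (Cmod z < delta)%R ->
      (exists t, transT q r z t) /\
      forall t, transT q r z t -> (Cmod (t - / L0 * (1 - z ^ 2 * (L1 / L0))) <= K * Cmod z ^ 4)%R.
Proof.
  intros hL0 hK HP.
  destruct (inverse_limit_expansion _ L0 L1 Kf hL0 hK HP) as [delta [K [[hd hd1] H]]].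
  exists delta, K. split; auto. intros z hz hzd.
  assert (znz : z <> 0) by (intros E; rewrite E, Cmod_0 in hz; lra).
  assert (Ew : Cmod (z * z) = (Cmod z * Cmod z)%R) by apply Cmod_mult.
  destruct (H (z * z) (Cmult_neq_0 z z znz znz) ltac:(rewrite Ew; nra)) as [[L [HL Lnz]] Hb].
  split.
  - exists (/ L). apply transT_iff; auto. rewrite Cinv_inv by auto. split; auto. apply Cinv_neq_0, Lnz.
  - intros t Ht. apply transT_iff in Ht as [tnz HT]; auto. specialize (Hb _ HT).
    rewrite Cinv_inv in Hb by auto.
    replace (z ^ 2) with (z * z) by (simpl; ring).
    replace (Cmod z ^ 4)%R with (Cmod (z * z) * Cmod (z * z))%R by (rewrite Ew; ring). exact Hb.
Qed.

Lemma transTbar_asymptotics (q r : Z -> C) (L0 L1 : C) (Kf : R) : L0 <> 0 -> (0 <= Kf)%R ->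
  (forall w : C, w <> 0 -> (Cmod w <= 1)%R -> (exists L, Tbar_limit q r w L) /\
    forall L, Tbar_limit q r w L -> (Cmod (L - L0 - w * L1) <= Kf * (Cmod w * Cmod w))%R) ->
  exists (M K : R), (0 < M)%R /\
    forall z : C, (M < Cmod z)%R ->
      (exists t, transTbar q r z t) /\
      forall t, transTbar q r z t ->
        (Cmod (t - / L0 * (1 - / z ^ 2 * (L1 / L0))) <= K * / Cmod z ^ 4)%R.
Proof.
  intros hL0 hK HP.
  destruct (inverse_limit_expansion _ L0 L1 Kf hL0 hK HP) as [delta [K [[hd hd1] H]]].
  exists (/ delta)%R, K. split; [apply Rinv_0_lt_compat, hd|]. intros z hz.
  assert (hM1 : (1 <= / delta)%R) by (rewrite <- Rinv_1; apply Rinv_le_contravar; lra).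
  assert (znz : z <> 0) by (intros E; rewrite E, Cmod_0 in hz; lra).
  assert (zznz : z * z <> 0) by (apply Cmult_neq_0; auto).
  assert (Ew : Cmod (/ (z * z)) = (/ (Cmod z * Cmod z))%R) by (rewrite Cmod_inv, Cmod_mult; auto).
  assert (hw : (Cmod (/ (z * z)) < delta)%R).
  { rewrite Ew. assert (/ delta < Cmod z * Cmod z)%R by nra.
    apply Rinv_lt_contravar in H0; [|apply Rmult_lt_0_compat; [apply Rinv_0_lt_compat|]; nra].
    rewrite Rinv_inv in H0. exact H0. }
  destruct (H (/ (z * z)) (Cinv_neq_0 _ zznz) hw) as [[L [HL Lnz]] Hb].
  split.
  - exists (/ L). apply transTbar_iff; auto. rewrite Cinv_inv by auto. split; auto. apply Cinv_neq_0, Lnz.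
  - intros t Ht. apply transTbar_iff in Ht as [tnz HT]; auto. specialize (Hb _ HT).
    rewrite Cinv_inv in Hb by auto.
    replace (/ z ^ 2) with (/ (z * z)) by (simpl; f_equal; ring).
    replace (/ Cmod z ^ 4)%R with (Cmod (/ (z * z)) * Cmod (/ (z * z)))%R
      by (rewrite Ew; field; apply Rgt_not_eq, Cmod_gt_0, znz). exact Hb.
Qed.

Ltac solve_coef_bound :=
  intro; cbv beta;
  try match goal with
      | |- context [Cmod (RtoC 1 - ?x - RtoC 1)] => replace (RtoC 1 - x - RtoC 1) with (- x) by ring
      end;
  try match goal with
      | |- context [Cmod (RtoC 1 - RtoC 1)] => replace (RtoC 1 - RtoC 1) with (RtoC 0) by ring
      end;
  rewrite ?Cmod_opp, ?Cmod_0;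
  first [ apply Rmult_le_pos; [assumption|apply Rlt_le, mu_pos] | solve [eauto] ].

Definition S_term (q r : Z -> C) (k : Z) : C :=
  r k * (q k - q (k + 1)%Z - q k * q (k + 1)%Z * r (k + 1)%Z)
    / ((1 - q k * r k) * (1 - q (k + 1)%Z * r (k + 1)%Z)).

Definition Q_term (q r : Z -> C) (k : Z) : C :=
  r (k + 2)%Z * (q k - q (k + 1)%Z - q k * q (k + 1)%Z * r (k + 1)%Z)
    / ((1 + q k * r (k + 1)%Z) * (1 + q (k + 1)%Z * r (k + 2)%Z)).

Theorem transT_expansion (q r : Z -> C) (hq : rapidly_decreasing q) (hr : rapidly_decreasing r)
  (h1 : forall n : Z, 1 - q n * r n <> 0) :
  exists Dinf Sinf : C,
    prodZ_is (fun j => 1 - q j * r j) Dinf /\ sumZ_is (S_term q r) Sinf /\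
    (exists (delta K : R), (0 < delta)%R /\
      forall z : C, (0 < Cmod z)%R -> (Cmod z < delta)%R ->
        (exists t, transT q r z t) /\
        forall t, transT q r z t -> (Cmod (t - / Dinf * (1 - z ^ 2 * Sinf)) <= K * Cmod z ^ 4)%R).
Proof.
  destruct (rapidly_decreasing_coef_bounds q r hq hr) as [C0 [hC0 [Bq [Br Bqr]]]].
  destruct (sys_expansion (fun _ => 0) (fun n => - q n) (fun _ => 0) (fun n => 1 - q n * r n)
                          (fun _ => 1) (fun n => q n) (fun n => r n) (fun n => q n * r n) C0 hC0)
    as [v0 [v1 [L0 [L1 [Kf [Hv0 [Cv0 [Hv1 [Cv1 [HL0 [HL1 [hKf Hw]]]]]]]]]]]];
    try solve_coef_bound.
  assert (EP : forall n, snd (v0 n) = (1 - q n * r n) * snd (v0 (n+1)%Z))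
    by (intros n; rewrite (Hv0 n) at 1; simpl; ring).
  assert (E1 : forall n, fst (v0 n) = - q n * snd (v0 (n+1)%Z))
    by (intros n; rewrite (Hv0 n) at 1; simpl; ring).
  assert (E2 : forall n, snd (v1 n) = (1 - q n * r n) * snd (v1 (n+1)%Z) + r n * fst (v0 (n+1)%Z)
                                      + q n * r n * snd (v0 (n+1)%Z))
    by (intros n; rewrite (Hv1 n) at 1; simpl; ring).
  assert (Hp1 : forall n, (Cmod (1 - q n * r n - 1) <= C0 * mu n)%R) by solve_coef_bound.
  pose proof (scalar_sol_neq_0 _ _ EP h1 (proj2 Cv0)) as Pnz.
  pose proof (scalar_sol_lim_neq_0 _ _ C0 hC0 EP h1 Hp1 (proj2 Cv0) L0 HL0) as L0nz.
  exists L0, (L1 / L0). split; [|split].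
  - exact (prodZ_is_scalar_sol _ _ EP h1 (proj2 Cv0) L0 HL0).
  - set (c := fun n => snd (v1 n) / snd (v0 n)).
    apply (sumZ_is_ext _ (fun k => c k - c (k+1)%Z)).
    { intros k. unfold c, S_term. rewrite (E2 k), (E1 (k+1)%Z), (EP k), (EP (k+1)%Z).
      field. repeat split; auto. }
    replace (L1 / L0) with (L1 / L0 - 0 / 1) by (field; auto).
    apply sumZ_is_telescope; [apply cv_minf_div; auto|apply cv_pinf_div; [apply RtoC_1_neq_0|apply Cv1|apply Cv0]].
  - exact (transT_asymptotics q r L0 L1 Kf L0nz hKf Hw).
Qed.

Theorem transTbar_expansion (q r : Z -> C) (hq : rapidly_decreasing q) (hr : rapidly_decreasing r)
  (h2 : forall n : Z, 1 + q n * r (n + 1)%Z <> 0) :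
  exists Einf Qinf : C,
    prodZ_is (fun j => 1 + q j * r (j + 1)%Z) Einf /\ sumZ_is (Q_term q r) Qinf /\
    (exists (M K : R), (0 < M)%R /\
      forall z : C, (M < Cmod z)%R ->
        (exists t, transTbar q r z t) /\
        forall t, transTbar q r z t ->
          (Cmod (t - / Einf * (1 - / z ^ 2 * Qinf)) <= K * / Cmod z ^ 4)%R).
Proof.
  destruct (rapidly_decreasing_coef_bounds q r hq hr) as [C0 [hC0 [Bq [Br Bqr]]]].
  destruct (sys_expansion (fun n => q n * r n) (fun n => r n) (fun n => q n) (fun _ => 1)
                          (fun n => 1 - q n * r n) (fun _ => 0) (fun n => - q n) (fun _ => 0) C0 hC0)
    as [v0 [v1 [L0 [L1 [Kf [Hv0 [Cv0 [Hv1 [Cv1 [HL0 [HL1 [hKf Hw]]]]]]]]]]]];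
    try solve_coef_bound.
  assert (R0 : forall n, fst (v0 n) = r n * snd (v0 n))
    by (intros n; rewrite (Hv0 n); simpl; ring).
  assert (EP : forall n, snd (v0 n) = (1 + q n * r (n+1)%Z) * snd (v0 (n+1)%Z))
    by (intros n; rewrite (Hv0 n) at 1; simpl; rewrite (R0 (n+1)%Z); ring).
  assert (R1 : forall n, fst (v1 n) = r n * snd (v1 n) + fst (v0 (n+1)%Z))
    by (intros n; rewrite (Hv1 n); simpl; ring).
  assert (E2 : forall n, snd (v1 n) = q n * fst (v1 (n+1)%Z) + snd (v1 (n+1)%Z) - q n * fst (v0 (n+1)%Z))
    by (intros n; rewrite (Hv1 n) at 1; simpl; ring).
  assert (Hp1 : forall n, (Cmod (1 + q n * r (n+1)%Z - 1) <= C0 * mu n)%R)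
    by (intros n; replace (1 + q n * r (n+1)%Z - 1) with (q n * r (n+1)%Z) by ring; auto).
  pose proof (scalar_sol_neq_0 _ _ EP h2 (proj2 Cv0)) as Pnz.
  pose proof (scalar_sol_lim_neq_0 _ _ C0 hC0 EP h2 Hp1 (proj2 Cv0) L0 HL0) as L0nz.
  exists L0, (L1 / L0). split; [|split].
  - exact (prodZ_is_scalar_sol _ _ EP h2 (proj2 Cv0) L0 HL0).
  - set (h := fun n => snd (v1 n) / snd (v0 n) - / (1 + q n * r (n + 1)%Z)).
    apply (sumZ_is_ext _ (fun k => h k - h (k+1)%Z)).
    { intros k. unfold h, Q_term.
      rewrite (E2 k), (R1 (k+1)%Z), (R0 (k+1+1)%Z), (R0 (k+1)%Z), (EP k), (EP (k+1)%Z).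
      replace (k + 1 + 1)%Z with (k + 2)%Z by lia.
      pose proof (h2 (k+1)%Z) as h2'. replace (k + 1 + 1)%Z with (k + 2)%Z in h2' by lia.
      pose proof (Pnz (k+2)%Z). field. repeat split; auto. }
    destruct (Cmod_le_mu_cv (fun n => q n * r (n+1)%Z) C0 (fun n => Bqr n (n+1)%Z)) as [xp xm].
    replace (L1 / L0) with ((L1 / L0 - 1) - (0 / 1 - 1)) by (field; auto).
    apply sumZ_is_telescope; apply cv_minf_sub || apply cv_pinf_sub.
    + apply cv_minf_div; auto.
    + apply cv_minf_iff_nat, cv_nat_inv_one_plus. exact (proj1 (cv_minf_iff_nat _ _) xm).
    + apply cv_pinf_div; [apply RtoC_1_neq_0|apply Cv1|apply Cv0].
    + apply cv_pinf_iff_nat, cv_nat_inv_one_plus. exact (proj1 (cv_pinf_iff_nat _ _) xp).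
  - exact (transTbar_asymptotics q r L0 L1 Kf L0nz hKf Hw).
Qed.

Theorem proposition2p7 (q r : Z -> C)
  (hq : rapidly_decreasing q) (hr : rapidly_decreasing r)
  (h1 : forall n : Z, 1 - q n * r n <> 0)
  (h2 : forall n : Z, 1 + q n * r (n + 1)%Z <> 0) :
  exists Dinf Einf Sinf Qinf : C,
    prodZ_is (fun j => 1 - q j * r j) Dinf /\
    prodZ_is (fun j => 1 + q j * r (j + 1)%Z) Einf /\
    sumZ_is (fun k => r k * (q k - q (k + 1)%Z - q k * q (k + 1)%Z * r (k + 1)%Z)
                      / ((1 - q k * r k) * (1 - q (k + 1)%Z * r (k + 1)%Z))) Sinf /\
    sumZ_is (fun k => r (k + 2)%Z * (q k - q (k + 1)%Z - q k * q (k + 1)%Z * r (k + 1)%Z)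
                      / ((1 + q k * r (k + 1)%Z) * (1 + q (k + 1)%Z * r (k + 2)%Z))) Qinf /\
    (* T = (1/D_oo) [1 - z^2 S_oo + O(z^4)] as z -> 0 *)
    (exists (delta K : R), (0 < delta)%R /\
      forall z : C, (0 < Cmod z)%R -> (Cmod z < delta)%R ->
        (exists t, transT q r z t) /\
        forall t, transT q r z t ->
          (Cmod (t - / Dinf * (1 - z ^ 2 * Sinf)) <= K * Cmod z ^ 4)%R) /\
    (* Tbar = (1/E_oo) [1 - z^{-2} Q_oo + O(z^{-4})] as z -> oo *)
    (exists (M K : R), (0 < M)%R /\
      forall z : C, (M < Cmod z)%R ->
        (exists t, transTbar q r z t) /\
        forall t, transTbar q r z t ->
          (Cmod (t - / Einf * (1 - / z ^ 2 * Qinf)) <= K * / Cmod z ^ 4)%R).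
Proof.
  destruct (transT_expansion q r hq hr h1) as [Dinf [Sinf [HD [HS HT]]]].
  destruct (transTbar_expansion q r hq hr h2) as [Einf [Qinf [HE [HQ HTb]]]].
  exists Dinf, Einf, Sinf, Qinf. repeat split; auto.
Qed.
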